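(* Let $\Gamma$ be a connected simple graph of connectivity $1$, and let $\Lambda_0$ be an arbitrary lobe of $\Gamma$. Let $\{P_i : i\in\mathbb{I}\}$ be the set of orbits of $\mathrm{Aut}(\Gamma)$ acting on $V\Gamma$. Let $S\le \mathrm{Aut}(\Gamma)$ be the setwise stabilizer of $\Lambda_0$, and let $\{Q_j : j\in\mathbb{J}\}$ be the set of orbits of $S$ on $V\Gamma$ that are contained in $V\Lambda_0$. For each $j\in\mathbb{J}$ let $P_{i_j}$ denote the orbit of $\mathrm{Aut}(\Gamma)$ containing $Q_j$. Then $\Gamma$ is lobe-transitive (i.e. $\mathrm{Aut}(\Gamma)$ acts transitively on the set $\mathscr{L}(\Gamma)$ of lobes) if and only if the following hold: (1) there is a family of graph isomorphisms $\sigma_\Lambda:\Lambda_0\to\Lambda$, one for each lobe $\Lambda\in\mathscr{L}(\Gamma)$, such that (2) for each $j\in\mathbb{J}$, the function $\tau_j:V\Gamma\to\mathbb{N}\cup\{0,\aleph_0\}$ defined by $$\tau_j(v)=\bigl|\{\Lambda\in\mathscr{L}(\Gamma): v\in\sigma_\Lambda(Q_j)\}\bigr|$$ satisfies (a) $\tau_j$ is constant on $P_i$ for every $i\in\mathbb{I}$, and (b) for all $v\in V\Gamma$, $\tau_j(v)>0$ if and only if $v\in P_{i_j}$ (i.e. $v$ lies in the $\mathrm{Aut}(\Gamma)$-orbit that contains the sets $\sigma_\Lambda(Q_j)$).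
   Context: All graphs are simple, connected, and finite or countably infinite (so vertex valences are finite or countably infinite). For edges $e_1,e_2$ of $\Gamma$ write $e_1\cong e_2$ if $e_1=e_2$ or $e_1,e_2$ lie on a common cycle; this is an equivalence relation on $E\Gamma$. A lobe of $\Gamma$ is the subgraph induced by an equivalence class (equivalently, a cut-edge with its two end-vertices, or a maximal biconnected subgraph). $\mathscr{L}(\Gamma)$ is the set of lobes. A vertex is a cut vertex if it lies in at least two lobes; a connected graph other than $K_2$ has connectivity $1$ iff it has a cut vertex. $\mathbb{N}$ denotes the positive integers. *)

From Stdlib Require Import List Arith Relations.
Import ListNotations.

Section Graphs.
Variable V : Type.
Variable adj : V -> V -> Prop.

Definition simple_graph : Prop :=
  (forall x y, adj x y -> adj y x) /\ (forall x, ~ adj x x).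

Definition connected : Prop :=
  forall x y, clos_refl_trans V adj x y.

Definition countable_vertices : Prop :=
  exists f : V -> nat, forall x y, f x = f y -> x = y.

Definition is_cycle (c : list V) : Prop :=
  3 <= length c /\ NoDup c /\
  forall i d, i < length c ->
    adj (nth i c d) (nth (S i mod length c) c d).

Definition edge_on_cycle (c : list V) (x y : V) : Prop :=
  exists i, i < length c /\
    ((nth i c x = x /\ nth (S i mod length c) c x = y) \/
     (nth i c x = y /\ nth (S i mod length c) c x = x)).

Definition edge_equiv (x1 y1 x2 y2 : V) : Prop :=
  ((x1 = x2 /\ y1 = y2) \/ (x1 = y2 /\ y1 = x2)) \/
  exists c, is_cycle c /\ edge_on_cycle c x1 y1 /\ edge_on_cycle c x2 y2.

(* A lobe is represented by its edge relation (symmetric): the equivalence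
   class of some edge {x,y}. Its vertex set is the set of end-vertices. *)
Definition is_lobe (L : V -> V -> Prop) : Prop :=
  exists x y, adj x y /\
    forall u w, L u w <-> (adj u w /\ edge_equiv x y u w).

Definition lobe_vertex (L : V -> V -> Prop) (v : V) : Prop :=
  exists w, L v w.

Definition has_cut_vertex : Prop :=
  exists v L1 L2, is_lobe L1 /\ is_lobe L2 /\ L1 <> L2 /\
    lobe_vertex L1 v /\ lobe_vertex L2 v.

Definition is_aut (f : V -> V) : Prop :=
  (forall y, exists x, f x = y) /\ (forall x y, f x = f y -> x = y) /\
  (forall x y, adj x y <-> adj (f x) (f y)).

Definition maps_lobe (f : V -> V) (L1 L2 : V -> V -> Prop) : Prop :=
  forall x y, L1 x y <-> L2 (f x) (f y).

Definition lobe_transitive : Prop :=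
  forall L1 L2, is_lobe L1 -> is_lobe L2 ->
    exists f, is_aut f /\ maps_lobe f L1 L2.

Definition lobe_iso (L1 L2 : V -> V -> Prop) (s : V -> V) : Prop :=
  (forall v, lobe_vertex L1 v -> lobe_vertex L2 (s v)) /\
  (forall v w, lobe_vertex L1 v -> lobe_vertex L1 w -> s v = s w -> v = w) /\
  (forall u, lobe_vertex L2 u -> exists v, lobe_vertex L1 v /\ s v = u) /\
  (forall v w, lobe_vertex L1 v -> lobe_vertex L1 w ->
     (L1 v w <-> L2 (s v) (s w))).

Definition aut_orbit (u v : V) : Prop :=
  exists f, is_aut f /\ f u = v.

Definition stab_orbit (L0 : V -> V -> Prop) (u v : V) : Prop :=
  exists g, is_aut g /\ maps_lobe g L0 L0 /\ g u = v.

End Graphs.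

Definition equinumerous {X : Type} (A B : X -> Prop) : Prop :=
  exists f : X -> X,
    (forall a, A a -> B (f a)) /\
    (forall a1 a2, A a1 -> A a2 -> f a1 = f a2 -> a1 = a2) /\
    (forall b, B b -> exists a, A a /\ f a = b).

(* For the S-orbit Q of q (q a vertex of L0), the set of lobes Λ with
   v ∈ σ_Λ(Q); τ_Q(v) is its cardinality. *)
Definition tau_set {V : Type} (adj : V -> V -> Prop) (L0 : V -> V -> Prop)
  (sigma : (V -> V -> Prop) -> V -> V) (q v : V) : (V -> V -> Prop) -> Prop :=
  fun L => is_lobe V adj L /\
    exists x, stab_orbit V adj L0 q x /\ sigma L x = v.

(* Two simple cycles sharing an edge can be spliced into one simple cycle through any
   prescribed edge of each, so the relation ≅ is transitive and a path leaving a lobe L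
   never returns to another vertex of L. Rooting Γ at a lobe R, every vertex v thus has a
   parent lobe (the first lobe on a shortest path from v to R) and every other lobe at v
   is attached at v, i.e. has v as its vertex closest to R: the lobes form a tree.

   If Aut(Γ) is lobe-transitive, the σ_Λ can be taken to be automorphisms, and an
   automorphism h maps the lobes counted by τ_j(u) bijectively onto those counted by
   τ_j(h u).

   Conversely, an automorphism carrying Λ1 to Λ2 is built down the trees rooted at Λ1 and
   Λ2, one level at a time. A lobe L is sent to a lobe Ψ(L) by σ_Ψ(L) ∘ g_L ∘ σ_L⁻¹ with
   g_L in the stabiliser S of Λ0. At a vertex v already sent to v', condition (b) puts v
   and v' in one Aut(Γ)-orbit; condition (a), after removing the parent lobes (in which v
   and v' have the same S-orbit type), gives for each S-orbit a bijection between the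
   lobes attached at v and at v' in which v, resp. v', has that type, and g_L is chosen to
   realise it. The union over all levels is the automorphism. *)

From Stdlib Require Import List Arith Lia Relations.
From Stdlib Require Import Classical ClassicalEpsilon FunctionalExtensionality PropExtensionality.
Import ListNotations.

Section Lists.
Context {V : Type}.

Fixpoint chain (R : V -> V -> Prop) (l : list V) : Prop :=
  match l with
  | x :: ((y :: _) as t) => R x y /\ chain R t
  | _ => True
  end.

Definition consec (l : list V) (a b : V) : Prop := exists l1 l2, l = l1 ++ a :: b :: l2.

Lemma consec_cons l x a b : consec l a b -> consec (x :: l) a b.
Proof. intros (l1 & l2 & ->). exists (x :: l1), l2. reflexivity. Qed.

Lemma consec_app_r l m a b : consec m a b -> consec (l ++ m) a b.
Proof. intros (l1 & l2 & ->). exists (l ++ l1), l2. now rewrite app_assoc. Qed.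

Lemma consec_app_l l m a b : consec l a b -> consec (l ++ m) a b.
Proof. intros (l1 & l2 & ->). exists l1, (l2 ++ m). now rewrite <- app_assoc. Qed.

Lemma consec_nil a b : ~ consec [] a b.
Proof. intros (l1 & l2 & H). destruct l1; discriminate. Qed.

Lemma consec_single x a b : ~ consec [x] a b.
Proof. intros (l1 & l2 & H). destruct l1 as [|? [|]]; discriminate. Qed.

Lemma consec_cons2 x y t a b :
  consec (x :: y :: t) a b <-> (a = x /\ b = y) \/ consec (y :: t) a b.
Proof.
  split.
  - intros ([|z l1] & l2 & H); simpl in H; inversion H; subst.
    + left; auto.
    + right. exists l1, l2. auto.
  - intros [[-> ->]|H].
    + exists [], t. reflexivity.
    + now apply consec_cons.
Qed.

Lemma chain_consec R l : chain R l <-> forall a b, consec l a b -> R a b.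
Proof.
  induction l as [|x [|y t] IH].
  - split; [intros _ a b H; now apply consec_nil in H | simpl; auto].
  - split; [intros _ a b H; now apply consec_single in H | simpl; auto].
  - simpl. split.
    + intros [Hxy Hc] a b Hab. apply consec_cons2 in Hab as [[-> ->]|Hab]; auto.
      apply IH; auto.
    + intros H. split; [apply H; exists [], t; reflexivity|].
      apply IH. intros a b Hab. apply H. now apply consec_cons.
Qed.

Lemma consec_app_cons p y q a b :
  consec (p ++ y :: q) a b <-> consec (p ++ [y]) a b \/ consec (y :: q) a b.
Proof.
  split.
  - revert y q. induction p as [|z p IH]; intros y q H; [right; exact H|].
    destruct p as [|w p]; simpl in H; apply consec_cons2 in H as [[-> ->]|H].
    + left. exists [], []. reflexivity.
    + right; exact H.
    + left. exists [], (p ++ [y]). reflexivity.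
    + destruct (IH y q H) as [H1|H1]; [left; now apply consec_cons|right; exact H1].
  - intros [(l1 & l2 & H)|H]; [|now apply consec_app_r].
    exists l1, (l2 ++ q).
    replace (p ++ y :: q) with ((p ++ [y]) ++ q) by now rewrite <- app_assoc.
    rewrite H. now rewrite <- app_assoc.
Qed.

Lemma chain_app_cons R p y q :
  chain R (p ++ y :: q) <-> chain R (p ++ [y]) /\ chain R (y :: q).
Proof.
  rewrite !chain_consec. split.
  - intros H. split; intros a b Hab; apply H, consec_app_cons; auto.
  - intros [H1 H2] a b Hab. apply consec_app_cons in Hab as [|]; auto.
Qed.

Lemma consec_rev l a b : consec (rev l) a b <-> consec l b a.
Proof.
  split.
  - intros (l1 & l2 & H). exists (rev l2), (rev l1).
    rewrite <- (rev_involutive l), H, rev_app_distr. simpl. now rewrite <- !app_assoc.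
  - intros (l1 & l2 & ->). exists (rev l2), (rev l1).
    rewrite rev_app_distr. simpl. now rewrite <- !app_assoc.
Qed.

Lemma chain_rev R l : (forall a b, R a b -> R b a) -> chain R l -> chain R (rev l).
Proof.
  intros Hs. rewrite !chain_consec. intros H a b Hab. apply Hs, H, consec_rev, Hab.
Qed.

Lemma chain_mono (R R' : V -> V -> Prop) l :
  (forall a b, R a b -> R' a b) -> chain R l -> chain R' l.
Proof. rewrite !chain_consec. auto. Qed.

Lemma consec_in l a b : consec l a b -> In a l /\ In b l.
Proof. intros (l1 & l2 & ->). split; apply in_or_app; simpl; auto. Qed.

Lemma consec_map (f : V -> V) l a b : consec l a b -> consec (map f l) (f a) (f b).
Proof. intros (l1 & l2 & ->). exists (map f l1), (map f l2). now rewrite map_app. Qed.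

Lemma consec_map_inv (f : V -> V) l a b : consec (map f l) a b ->
  exists a' b', consec l a' b' /\ f a' = a /\ f b' = b.
Proof.
  induction l as [|x [|y t] IH]; simpl; intros H.
  - now apply consec_nil in H.
  - now apply consec_single in H.
  - apply consec_cons2 in H as [[-> ->]|H].
    + exists x, y. split; auto. exists [], t; reflexivity.
    + destruct (IH H) as (a' & b' & H1 & H2 & H3). exists a', b'.
      split; auto. now apply consec_cons.
Qed.

Lemma chain_map (R R' : V -> V -> Prop) (f : V -> V) l :
  (forall a b, R a b -> R' (f a) (f b)) -> chain R l -> chain R' (map f l).
Proof.
  rewrite !chain_consec. intros Hf H a b Hab.
  destruct (consec_map_inv f l a b Hab) as (a' & b' & H1 & <- & <-). auto.
Qed.

Lemma NoDup_app_iff (l1 l2 : list V) :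
  NoDup (l1 ++ l2) <-> NoDup l1 /\ NoDup l2 /\ (forall a, In a l1 -> ~ In a l2).
Proof.
  split; [|intros (H1 & H2 & H3); now apply NoDup_app].
  intros H. split; [eapply NoDup_app_remove_r; eauto|].
  split; [eapply NoDup_app_remove_l; eauto|].
  induction l1 as [|x l1 IH]; simpl; [tauto|].
  inversion H; subst. intros a [->|Ha].
  - intros Hin. apply H2. apply in_or_app; auto.
  - apply IH; auto.
Qed.

Lemma NoDup_join (a z : V) A Q Rest :
  NoDup (a :: A ++ z :: Rest) -> NoDup (z :: Q ++ [a]) -> (forall u, In u A -> ~ In u Q) ->
  NoDup (a :: A ++ z :: Q).
Proof.
  intros Hnd HQnd Hdisj.
  apply NoDup_cons_iff in Hnd as [Hnd1 Hnd2].
  apply NoDup_cons_iff in HQnd as [HQ1 HQ2]. apply NoDup_app_iff in HQ2 as (HQ3 & _ & HQ4).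
  constructor.
  - intros Hin. apply in_app_iff in Hin as [Hin|[<-|Hin]].
    + apply Hnd1, in_or_app. left. exact Hin.
    + apply Hnd1, in_or_app. right. left. reflexivity.
    + exact (HQ4 a Hin (or_introl eq_refl)).
  - apply NoDup_app_iff in Hnd2 as (HA1 & _ & HA3). apply NoDup_app_iff.
    split; auto. split; [constructor; auto; intros Hin; apply HQ1, in_or_app; auto|].
    intros u Hu [E|Hu']; [subst u; exact (HA3 z Hu (or_introl eq_refl))|exact (Hdisj u Hu Hu')].
Qed.

Lemma split_first (P : V -> Prop) l : (exists x, In x l /\ P x) ->
  exists A x B, l = A ++ x :: B /\ P x /\ forall y, In y A -> ~ P y.
Proof.
  induction l as [|z l IH]; intros (x & Hx & Px); [destruct Hx|].
  destruct (classic (P z)) as [Pz|Pz].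
  - exists [], z, l. split; [reflexivity|]. split; [exact Pz|]. intros y [].
  - destruct Hx as [->|Hx]; [contradiction|].
    destruct IH as (A & y & B & -> & Py & HA); [eauto|].
    exists (z :: A), y, B. split; auto. split; auto.
    intros w [->|Hw]; auto.
Qed.

Lemma split_last (P : V -> Prop) l : (exists x, In x l /\ P x) ->
  exists A x B, l = A ++ x :: B /\ P x /\ forall y, In y B -> ~ P y.
Proof.
  intros (x & Hx & Px). destruct (split_first P (rev l)) as (A & y & B & H1 & H2 & H3).
  { exists x. split; auto. now apply in_rev in Hx. }
  exists (rev B), y, (rev A). split.
  - rewrite <- (rev_involutive l), H1, rev_app_distr. simpl. now rewrite <- app_assoc.
  - split; auto. intros z Hz. apply H3. now apply in_rev.
Qed.

Lemma split_outer (P : V -> Prop) l u w : u <> w -> In u l -> In w l -> P u -> P w ->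
  exists A x B y D, l = A ++ x :: B ++ y :: D /\ P x /\ P y /\
    (forall z, In z A -> ~ P z) /\ (forall z, In z D -> ~ P z).
Proof.
  intros Huw Hu Hw Pu Pw.
  destruct (split_first P l) as (A & x & Rest & -> & Px & HA); [eauto|].
  assert (HR : exists z, In z Rest /\ P z).
  { assert (Hz : exists z, z <> x /\ In z (A ++ x :: Rest) /\ P z)
      by (destruct (classic (u = x)) as [->|]; eauto).
    destruct Hz as (z & Hzx & Hz & Pz). exists z. split; auto.
    apply in_app_iff in Hz as [Hz|[Hz|Hz]]; [|congruence|exact Hz].
    exfalso. exact (HA _ Hz Pz). }
  destruct (split_last P Rest HR) as (B & y & D & -> & Py & HD).
  exists A, x, B, y, D. auto.
Qed.

Lemma NoDup_outer (A B D : list V) x y :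
  NoDup (A ++ x :: B ++ y :: D) -> x <> y /\ NoDup (D ++ A).
Proof.
  intros H. apply NoDup_app_iff in H as (HA & H & Hdisj).
  apply NoDup_cons_iff in H as [Hx H]. apply NoDup_app_iff in H as (_ & H & _).
  apply NoDup_cons_iff in H as [_ HD]. split.
  - intros <-. apply Hx, in_or_app. right. left. auto.
  - apply NoDup_app_iff. split; auto. split; auto.
    intros a Ha Ha'. apply (Hdisj a Ha'). right. apply in_or_app. right. right. exact Ha.
Qed.

Lemma nil_or_snoc (l : list V) : l = [] \/ exists l' z, l = l' ++ [z].
Proof.
  destruct l as [|a l]; [auto|right].
  destruct (exists_last (l := a :: l)) as (l' & z & H); [congruence|eauto].
Qed.

End Lists.

Lemma clos_rt_sym {V} (R : V -> V -> Prop) a b : (forall x y, R x y -> R y x) ->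
  clos_refl_trans V R a b -> clos_refl_trans V R b a.
Proof.
  intros Hs H. induction H; [apply rt_step; auto|apply rt_refl|eapply rt_trans; eauto].
Qed.

Lemma clos_rt_mono {V} (R R' : V -> V -> Prop) a b : (forall x y, R x y -> R' x y) ->
  clos_refl_trans V R a b -> clos_refl_trans V R' a b.
Proof.
  intros Hs H. induction H; [apply rt_step; auto|apply rt_refl|eapply rt_trans; eauto].
Qed.

Lemma clos_rt_simple_path {V} (R : V -> V -> Prop) a b : clos_refl_trans V R a b -> a <> b ->
  exists l, NoDup (a :: l ++ [b]) /\ chain R (a :: l ++ [b]).
Proof.
  intros H. apply clos_rt_rt1n in H. induction H as [a|a a' b Ha H IH]; [congruence|].
  intros Hab. destruct (classic (a' = b)) as [->|Hab'].
  - exists []. simpl. split; [|auto]. constructor; [intros [|[]]; congruence|].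
    constructor; [intros []|constructor].
  - destruct (IH Hab') as (l' & Hnd & Hch).
    destruct (classic (In a (a' :: l'))) as [Hin|Hin].
    + apply in_split in Hin as (l1 & l2 & Hl). exists l2.
      change (a' :: l' ++ [b]) with ((a' :: l') ++ [b]) in Hnd, Hch.
      rewrite Hl, <- app_assoc in Hnd, Hch. simpl in Hnd, Hch.
      split; [eapply NoDup_app_remove_l; eauto|].
      apply chain_app_cons in Hch as [_ Hch]. exact Hch.
    + exists (a' :: l'). split.
      * constructor; auto. simpl. intros [->|Hin']; [apply Hin; left; auto|].
        apply in_app_iff in Hin' as [Hin'|[Hin'|[]]]; [apply Hin; right; auto|congruence].
      * simpl. split; auto.
Qed.

Lemma chain_clos_rt {V} (R : V -> V -> Prop) l a b : (forall x y, R x y -> R y x) ->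
  chain R l -> In a l -> In b l -> clos_refl_trans V R a b.
Proof.
  intros Hs.
  assert (Hhd : forall m x, chain R (x :: m) -> forall c, In c (x :: m) -> clos_refl_trans V R x c).
  { induction m as [|y t IH]; intros x Hc c Hc'.
    - destruct Hc' as [->|[]]. apply rt_refl.
    - destruct Hc' as [->|Hc']; [apply rt_refl|]. destruct Hc as [Hxy Hc].
      eapply rt_trans; [apply rt_step, Hxy|]. apply IH; auto. }
  intros Hc Ha Hb. destruct l as [|x t]; [destruct Ha|].
  eapply rt_trans; [apply clos_rt_sym; auto; apply (Hhd t x Hc a Ha)|]. apply (Hhd t x Hc b Hb).
Qed.

Section Cycles.
Context {V : Type} (adj : V -> V -> Prop).
Hypothesis Hsym : forall x y, adj x y -> adj y x.
Hypothesis Hirr : forall x, ~ adj x x.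

Definition closed_walk (l : list V) : list V :=
  match l with [] => [] | x :: r => x :: r ++ [x] end.

Definition simple_cycle (l : list V) : Prop :=
  3 <= length l /\ NoDup l /\ chain adj (closed_walk l).

Definition on_cycle (l : list V) (a b : V) : Prop :=
  consec (closed_walk l) a b \/ consec (closed_walk l) b a.

Definition same_cycle (c c' : list V) : Prop :=
  (forall u w, consec (closed_walk c) u w <-> consec (closed_walk c') u w) /\
  (forall x, In x c <-> In x c').

Lemma closed_walk_arcs a X b Y u w :
  consec (closed_walk (a :: X ++ b :: Y)) u w <->
  consec (a :: X ++ [b]) u w \/ consec (b :: Y ++ [a]) u w.
Proof.
  simpl. replace (a :: (X ++ b :: Y) ++ [a]) with ((a :: X) ++ b :: (Y ++ [a]))
    by (simpl; now rewrite <- app_assoc).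
  rewrite consec_app_cons. simpl. tauto.
Qed.

Lemma in_closed_walk c x : In x (closed_walk c) <-> In x c.
Proof. destruct c as [|y r]; simpl; [tauto|]. rewrite in_app_iff. simpl. intuition. Qed.

Lemma same_cycle_refl c : same_cycle c c.
Proof. split; intros; tauto. Qed.

Lemma same_cycle_sym c c' : same_cycle c c' -> same_cycle c' c.
Proof. intros [A B]. split; intros; [rewrite A|rewrite B]; tauto. Qed.

Lemma simple_cycle_rot p q : p <> [] -> q <> [] -> simple_cycle (p ++ q) ->
  simple_cycle (q ++ p) /\ same_cycle (p ++ q) (q ++ p).
Proof.
  destruct p as [|a X]; [congruence|]. destruct q as [|b Y]; [congruence|]. intros _ _.
  assert (E : forall u w, consec (closed_walk ((a :: X) ++ b :: Y)) u w <->
                          consec (closed_walk ((b :: Y) ++ a :: X)) u w).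
  { intros u w. simpl app. rewrite !closed_walk_arcs. tauto. }
  assert (I : forall x, In x ((a :: X) ++ b :: Y) <-> In x ((b :: Y) ++ a :: X)).
  { intros x. rewrite !in_app_iff. tauto. }
  intros (H1 & H2 & H3). split; [|split; auto]. split; [|split].
  - simpl in *. rewrite !length_app in *. simpl in *. lia.
  - apply NoDup_app_iff in H2 as (N1 & N2 & N3). apply NoDup_app_iff.
    split; [exact N2|]. split; [exact N1|]. intros x Hx Hx'. exact (N3 x Hx' Hx).
  - rewrite chain_consec in *. intros u w Huw. apply H3, E, Huw.
Qed.

Lemma simple_cycle_rot_to c a : simple_cycle c -> In a c ->
  exists r, simple_cycle (a :: r) /\ same_cycle c (a :: r).
Proof.
  intros Hc Ha. apply in_split in Ha as (l1 & l2 & ->).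
  destruct l1 as [|z l1]; [exists l2; split; auto; apply same_cycle_refl|].
  destruct (simple_cycle_rot (z :: l1) (a :: l2)) as [H1 H2]; try congruence; auto.
  exists (l2 ++ z :: l1). split; auto.
Qed.

Lemma simple_cycle_two c a b : simple_cycle c -> In a c -> In b c -> a <> b ->
  exists X Y, simple_cycle (a :: X ++ b :: Y) /\ same_cycle c (a :: X ++ b :: Y).
Proof.
  intros Hc Ha Hb Hab. destruct (simple_cycle_rot_to c a Hc Ha) as (r & Hr & Heq).
  assert (Hbr : In b r) by (apply Heq in Hb; destruct Hb; [congruence|auto]).
  apply in_split in Hbr as (X & Y & ->). exists X, Y. auto.
Qed.

Lemma simple_cycle_from_edge c s t : simple_cycle c -> consec (closed_walk c) s t ->
  exists R, simple_cycle (t :: R ++ [s]) /\ same_cycle c (t :: R ++ [s]).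
Proof.
  intros Hc (l1 & l2 & H).
  destruct c as [|x r]; [destruct Hc as [Hl _]; simpl in Hl; lia|].
  change (closed_walk (x :: r)) with ((x :: r) ++ [x]) in H.
  destruct (nil_or_snoc l2) as [->|(l2' & z & ->)].
  - replace (l1 ++ [s; t]) with ((l1 ++ [s]) ++ [t]) in H by now rewrite <- app_assoc.
    apply app_inj_tail in H as [H Heq]. subst x.
    destruct l1 as [|y l1]; simpl in H; inversion H; subst.
    + destruct Hc as [Hl _]. simpl in Hl. lia.
    + exists l1. split; auto. apply same_cycle_refl.
  - replace (l1 ++ s :: t :: l2' ++ [z]) with ((l1 ++ s :: t :: l2') ++ [z]) in H
      by now rewrite <- app_assoc.
    apply app_inj_tail in H as [H _]. rewrite H in Hc |- *.
    replace (l1 ++ s :: t :: l2') with ((l1 ++ [s]) ++ (t :: l2')) in Hc |- *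
      by now rewrite <- app_assoc.
    destruct (simple_cycle_rot (l1 ++ [s]) (t :: l2')) as [H1 H2]; auto.
    + destruct l1; discriminate.
    + congruence.
    + exists (l2' ++ l1). rewrite <- app_assoc. simpl in H1, H2. split; auto.
Qed.

Lemma simple_cycle_of_arcs a M b N :
  chain adj (a :: M ++ [b]) -> chain adj (b :: N ++ [a]) -> NoDup (a :: M ++ b :: N) ->
  (M <> [] \/ N <> []) -> simple_cycle (a :: M ++ b :: N).
Proof.
  intros H1 H2 H3 H4. split; [|split; auto].
  - simpl. rewrite length_app. simpl.
    destruct H4 as [H4|H4]; [destruct M|destruct N]; try congruence; simpl; lia.
  - rewrite chain_consec in *. intros u w Huw.
    apply closed_walk_arcs in Huw as [Huw|Huw]; [exact (H1 _ _ Huw)|exact (H2 _ _ Huw)].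
Qed.

Lemma on_cycle_sym c a b : on_cycle c a b -> on_cycle c b a.
Proof. unfold on_cycle; tauto. Qed.

Lemma on_cycle_adj c a b : simple_cycle c -> on_cycle c a b -> adj a b.
Proof. intros (_ & _ & H) [Hab|Hab]; rewrite chain_consec in H; auto. Qed.

Lemma on_cycle_in c a b : on_cycle c a b -> In a c /\ In b c.
Proof.
  intros [H|H]; apply consec_in in H as [H1 H2]; rewrite !in_closed_walk in *; auto.
Qed.

Lemma on_same_cycle c c' a b : same_cycle c c' -> on_cycle c a b -> on_cycle c' a b.
Proof. intros [E _] [H|H]; [left|right]; apply E; auto. Qed.

Lemma arc_through_edge ci X cj Y x y :
  simple_cycle (ci :: X ++ cj :: Y) -> on_cycle (ci :: X ++ cj :: Y) x y ->
  exists Y', chain adj (cj :: Y' ++ [ci]) /\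
    (consec (cj :: Y' ++ [ci]) x y \/ consec (cj :: Y' ++ [ci]) y x) /\
    NoDup (ci :: cj :: Y') /\ (forall z, In z Y' -> In z (ci :: X ++ cj :: Y)) /\
    (Y' = [] -> on_cycle (ci :: X ++ cj :: Y) ci cj).
Proof.
  intros HC Hxy. destruct HC as (_ & HCnd & HCch).
  rewrite chain_consec in HCch. setoid_rewrite closed_walk_arcs in HCch.
  apply NoDup_cons_iff in HCnd as [Hci HCnd].
  apply NoDup_app_iff in HCnd as (HXnd & HYnd & HXY).
  destruct (classic (consec (cj :: Y ++ [ci]) x y \/ consec (cj :: Y ++ [ci]) y x))
    as [HY|HY].
  - exists Y. split; [|split; [exact HY|split; [|split]]].
    + apply chain_consec. auto.
    + constructor; [|exact HYnd].
      intros Hin. apply Hci, in_or_app. right. exact Hin.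
    + intros z Hz. right. apply in_or_app. right. right. exact Hz.
    + intros ->. right. apply closed_walk_arcs. right. exists [], []. reflexivity.
  - assert (HX : consec (ci :: X ++ [cj]) x y \/ consec (ci :: X ++ [cj]) y x)
      by (destruct Hxy as [E|E]; apply closed_walk_arcs in E; tauto).
    assert (Hrev : rev (ci :: X ++ [cj]) = cj :: rev X ++ [ci])
      by (simpl; now rewrite rev_app_distr).
    exists (rev X). rewrite <- Hrev, !consec_rev.
    split; [|split; [tauto|split; [|split]]].
    + apply chain_rev; auto. apply chain_consec. auto.
    + constructor.
      * intros [E|Hin]; apply Hci, in_or_app; [right; left; exact E|left; now apply in_rev].
      * constructor; [|now apply NoDup_rev]. intros Hin. apply in_rev in Hin.
        apply (HXY cj Hin). left. auto.
    + intros z Hz. right. apply in_or_app. left. now apply in_rev.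
    + intros HX0. destruct X as [|x0 X]; [|simpl in HX0; destruct (rev X); discriminate].
      left. apply closed_walk_arcs. left. exists [], []. reflexivity.
Qed.

Lemma chain_around_edge t M s A x B y D :
  t :: M ++ [s] = A ++ x :: B ++ y :: D -> chain adj (closed_walk (t :: M ++ [s])) ->
  chain adj (y :: (D ++ A) ++ [x]) /\ consec (y :: (D ++ A) ++ [x]) s t.
Proof.
  intros HL Hch.
  assert (HK : exists K, y :: D = K ++ [s]).
  { destruct (nil_or_snoc (y :: D)) as [H0|(K & z & HK)]; [discriminate|].
    exists K. rewrite HK. rewrite HK in HL.
    replace (A ++ x :: B ++ K ++ [z]) with ((A ++ x :: B ++ K) ++ [z]) in HL
      by (rewrite <- app_assoc; simpl; now rewrite <- app_assoc).
    change (t :: M ++ [s]) with ((t :: M) ++ [s]) in HL.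
    apply app_inj_tail in HL as [_ ->]. reflexivity. }
  assert (HA : exists A', A ++ [x] = t :: A').
  { destruct A as [|a0 A]; simpl in HL; inversion HL; [exists []|exists (A ++ [x])]; reflexivity. }
  destruct HK as (K & HK). destruct HA as (A' & HA).
  assert (Hwalk : closed_walk (t :: M ++ [s]) = A ++ x :: B ++ y :: D ++ [t]).
  { change (closed_walk (t :: M ++ [s])) with ((t :: M ++ [s]) ++ [t]).
    rewrite HL, <- app_assoc. simpl. now rewrite <- app_assoc. }
  assert (HP : y :: (D ++ A) ++ [x] = K ++ s :: t :: A').
  { rewrite <- app_assoc, app_comm_cons, HK, HA, <- app_assoc. reflexivity. }
  rewrite HP. split; [|exists K, A'; reflexivity].
  apply chain_consec. intros a b Hab. rewrite chain_consec, Hwalk in Hch.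
  apply Hch. apply consec_app_cons in Hab as [Hab|Hab].
  - rewrite <- HK in Hab.
    replace (A ++ x :: B ++ y :: D ++ [t]) with ((A ++ x :: B) ++ ((y :: D) ++ [t]))
      by (rewrite <- app_assoc; reflexivity).
    apply consec_app_r, consec_app_l, Hab.
  - apply consec_cons2 in Hab as [[-> ->]|Hab].
    + rewrite <- Hwalk. exists (t :: M), []. simpl. now rewrite <- app_assoc.
    + rewrite <- HA in Hab.
      replace (A ++ x :: B ++ y :: D ++ [t]) with ((A ++ [x]) ++ (B ++ y :: D ++ [t]))
        by (rewrite <- app_assoc; reflexivity).
      apply consec_app_l, Hab.
Qed.

(* a and b are the first vertices in P met walking round c backwards from s and forwards
   from t. *)
Lemma simple_cycle_bridge c s t (P : V -> Prop) u w :
  simple_cycle c -> consec (closed_walk c) s t -> u <> w -> In u c -> In w c -> P u -> P w ->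
  exists a M b, a <> b /\ P a /\ P b /\ (forall y, In y M -> ~ P y) /\ NoDup M /\
    chain adj (a :: M ++ [b]) /\ consec (a :: M ++ [b]) s t.
Proof.
  intros Hc Hst Huw Hu Hw Pu Pw.
  destruct (simple_cycle_from_edge c s t Hc Hst) as (R & (_ & Hnd & Hch) & _ & Hin).
  apply Hin in Hu, Hw.
  destruct (split_outer P _ u w Huw Hu Hw Pu Pw)
    as (A & cj & B & ci & D & HL & Pcj & Pci & HA & HD).
  rewrite HL in Hnd. destruct (NoDup_outer A B D cj ci Hnd) as [Hij HDA].
  destruct (chain_around_edge _ _ _ _ _ _ _ _ HL Hch) as [Hpath Hst'].
  exists ci, (D ++ A), cj. split; [auto|]. split; [exact Pci|]. split; [exact Pcj|].
  split; [|auto]. intros y Hy. apply in_app_iff in Hy as [|]; [apply HD|apply HA]; auto.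
Qed.

Lemma simple_cycle_splice c1 c2 x1 y1 x2 y2 s t :
  simple_cycle c1 -> simple_cycle c2 -> on_cycle c1 x1 y1 -> on_cycle c1 x2 y2 ->
  on_cycle c2 x2 y2 -> consec (closed_walk c2) s t -> ~ on_cycle c1 s t ->
  exists c, simple_cycle c /\ on_cycle c x1 y1 /\ on_cycle c s t.
Proof.
  intros H1 H2 E1 E2 E2' Est Hn.
  assert (Hne : x2 <> y2) by (intros <-; exact (Hirr x2 (on_cycle_adj c1 x2 x2 H1 E2))).
  destruct (on_cycle_in c1 x2 y2 E2) as [Hx2 Hy2].
  destruct (on_cycle_in c2 x2 y2 E2') as [Hx2' Hy2'].
  destruct (simple_cycle_bridge c2 s t (fun v => In v c1) x2 y2)
    as (ci & M & cj & Hij & Hci & Hcj & HM & HMnd & HMch & HMst); auto.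
  destruct (simple_cycle_two c1 ci cj H1 Hci Hcj Hij) as (X & Y & HC & HCeq).
  destruct (arc_through_edge ci X cj Y x1 y1 HC (on_same_cycle _ _ _ _ HCeq E1))
    as (Y' & HYch & HYxy & HYnd & HYin & HY0).
  apply NoDup_cons_iff in HYnd as [HYci HYnd].
  assert (HY'c1 : forall z, In z Y' -> In z c1) by (intros z Hz; apply HCeq, HYin, Hz).
  exists (ci :: M ++ cj :: Y'). split; [|split].
  - apply simple_cycle_of_arcs; auto.
    + constructor.
      * intros Hin. apply in_app_iff in Hin as [Hin|[Hin|Hin]].
        -- exact (HM _ Hin Hci).
        -- congruence.
        -- apply HYci. right. exact Hin.
      * apply NoDup_app_iff. split; auto. split; auto.
        intros a Ha [<-|Ha']; [exact (HM _ Ha Hcj)|exact (HM _ Ha (HY'c1 _ Ha'))].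
    + destruct (classic (M = [])) as [->|E]; [|auto].
      destruct (classic (Y' = [])) as [E'|E']; [|auto].
      exfalso. simpl in HMst. apply consec_cons2 in HMst as [[-> ->]|HMst];
        [|now apply consec_single in HMst].
      apply Hn, (on_same_cycle _ _ _ _ (same_cycle_sym _ _ HCeq)), HY0, E'.
  - destruct HYxy; [left|right]; apply closed_walk_arcs; right; auto.
  - left. apply closed_walk_arcs. left. exact HMst.
Qed.

Definition edge_cong (x1 y1 x2 y2 : V) : Prop :=
  ((x1 = x2 /\ y1 = y2) \/ (x1 = y2 /\ y1 = x2)) \/
  exists c, simple_cycle c /\ on_cycle c x1 y1 /\ on_cycle c x2 y2.

Lemma edge_cong_refl x y : edge_cong x y x y.
Proof. left; left; auto. Qed.

Lemma edge_cong_sym a b c d : edge_cong a b c d -> edge_cong c d a b.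
Proof.
  intros [[[-> ->]|[-> ->]]|(cy & H1 & H2 & H3)]; [left; left; auto|left; right; auto|].
  right. exists cy. auto.
Qed.

Lemma edge_cong_flip a b c d : edge_cong a b c d -> edge_cong b a c d.
Proof.
  intros [[[-> ->]|[-> ->]]|(cy & H1 & H2 & H3)]; [left; right; auto|left; left; auto|].
  right. exists cy. split; auto. split; auto. now apply on_cycle_sym.
Qed.

Lemma edge_cong_trans x1 y1 x2 y2 x3 y3 :
  edge_cong x1 y1 x2 y2 -> edge_cong x2 y2 x3 y3 -> edge_cong x1 y1 x3 y3.
Proof.
  intros H12 H23.
  destruct H12 as [[[-> ->]|[-> ->]]|(c1 & C1 & A1 & A2)]; [exact H23|now apply edge_cong_flip|].
  destruct H23 as [[[<- <-]|[<- <-]]|(c2 & C2 & B2 & B3)].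
  - right. exists c1. auto.
  - right. exists c1. split; auto. split; auto. now apply on_cycle_sym.
  - right. destruct (classic (on_cycle c1 x3 y3)) as [Hc|Hc]; [exists c1; auto|].
    destruct B3 as [B3|B3].
    + exact (simple_cycle_splice c1 c2 x1 y1 x2 y2 x3 y3 C1 C2 A1 A2 B2 B3 Hc).
    + destruct (simple_cycle_splice c1 c2 x1 y1 x2 y2 y3 x3) as (c & ? & ? & ?); auto.
      { intros Hc'. apply Hc. now apply on_cycle_sym. }
      exists c. split; auto. split; auto. now apply on_cycle_sym.
Qed.

End Cycles.

Section Indexing.
Context {V : Type} (adj : V -> V -> Prop).

Lemma consec_nth (l : list V) a b : consec l a b <->
  exists i, S i < length l /\ forall d, nth i l d = a /\ nth (S i) l d = b.
Proof.
  induction l as [|x [|y t] IH].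
  - split; [intros H; now apply consec_nil in H|]. intros (i & Hi & _). simpl in Hi; lia.
  - split; [intros H; now apply consec_single in H|]. intros (i & Hi & _). simpl in Hi; lia.
  - rewrite consec_cons2, IH. split.
    + intros [[-> ->]|(i & Hi & H)].
      * exists 0. simpl. split; [lia|auto].
      * exists (S i). simpl in *. split; [lia|]. intros d. apply H.
    + intros ([|i] & Hi & H).
      * left. destruct (H x) as [H1 H2]. simpl in *. auto.
      * right. exists i. simpl in *. split; [lia|]. intros d. apply H.
Qed.

Lemma chain_nth R (l : list V) : chain R l <->
  forall i d, S i < length l -> R (nth i l d) (nth (S i) l d).
Proof.
  rewrite chain_consec. split.
  - intros H i d Hi. apply H, consec_nth. exists i. split; [exact Hi|].
    intros d'. split; apply nth_indep; lia.
  - intros H a b Hab. apply consec_nth in Hab as (i & Hi & Hab).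
    pose proof (H i a Hi) as HR. destruct (Hab a) as [E1 E2]. rewrite E1, E2 in HR. exact HR.
Qed.

Lemma closed_walk_nth (c : list V) i d d' : c <> [] -> i < length c ->
  nth i (closed_walk c) d = nth i c d' /\
  nth (S i) (closed_walk c) d = nth (S i mod length c) c d'.
Proof.
  intros Hc Hi. destruct c as [|x r]; [congruence|].
  change (closed_walk (x :: r)) with ((x :: r) ++ [x]). split.
  - rewrite app_nth1 by auto. apply nth_indep; auto.
  - destruct (Nat.eq_dec (S i) (length (x :: r))) as [E|E].
    + rewrite E, Nat.Div0.mod_same, nth_middle. reflexivity.
    + rewrite Nat.mod_small, app_nth1 by lia. apply nth_indep; lia.
Qed.

Lemma length_closed_walk (c : list V) : c <> [] -> length (closed_walk c) = S (length c).
Proof. destruct c; [congruence|]. simpl. rewrite length_app. simpl. lia. Qed.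

Lemma is_cycle_simple_cycle (c : list V) : is_cycle V adj c <-> simple_cycle adj c.
Proof.
  unfold is_cycle, simple_cycle.
  split; intros (H1 & H2 & H3); split; auto; split; auto;
    (assert (Hc : c <> []) by (destruct c; simpl in *; [lia|congruence])).
  - apply chain_nth. intros i d Hi. rewrite length_closed_walk in Hi by exact Hc.
    destruct (closed_walk_nth c i d d Hc) as [E1 E2]; [lia|]. rewrite E1, E2. apply H3. lia.
  - intros i d Hi. rewrite chain_nth in H3.
    destruct (closed_walk_nth c i d d Hc Hi) as [E1 E2]. rewrite <- E1, <- E2. apply H3.
    rewrite length_closed_walk by exact Hc. lia.
Qed.

Lemma edge_on_cycle_on_cycle (c : list V) x y :
  c <> [] -> (edge_on_cycle V c x y <-> on_cycle c x y).
Proof.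
  intros Hc. unfold edge_on_cycle, on_cycle. rewrite !consec_nth. split.
  - intros (i & Hi & H).
    assert (Hl : S i < length (closed_walk c)) by (rewrite length_closed_walk by exact Hc; lia).
    destruct H as [[H1 H2]|[H1 H2]]; [left|right]; exists i; split; auto; intros d;
      destruct (closed_walk_nth c i d x Hc Hi) as [F1 F2]; rewrite F1, F2; auto.
  - intros [(i & Hi & H)|(i & Hi & H)];
    (assert (Hi' : i < length c) by (rewrite length_closed_walk in Hi by exact Hc; lia));
    exists i; split; auto; destruct (closed_walk_nth c i x x Hc Hi') as [E1 E2];
    destruct (H x) as [H1 H2]; rewrite <- E1, <- E2; auto.
Qed.

Lemma edge_equiv_cong x1 y1 x2 y2 :
  edge_equiv V adj x1 y1 x2 y2 <-> edge_cong adj x1 y1 x2 y2.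
Proof.
  unfold edge_equiv, edge_cong.
  split; intros [H|(c & H1 & H2 & H3)]; try (left; exact H); right; exists c;
    rewrite ?is_cycle_simple_cycle in *;
    (assert (Hc : c <> []) by (intros ->; destruct H1 as [Hl _]; simpl in Hl; lia));
    rewrite !edge_on_cycle_on_cycle in * by exact Hc; auto.
Qed.

End Indexing.

Section Lobes.
Context {V : Type} (adj : V -> V -> Prop).
Hypothesis Hsym : forall x y, adj x y -> adj y x.
Hypothesis Hirr : forall x, ~ adj x x.

Notation lobe := (is_lobe V adj).
Notation lv := (lobe_vertex V).

Definition lobe_of (u w : V) : V -> V -> Prop := fun a b => adj a b /\ edge_cong adj u w a b.

Lemma is_lobe_iff L :
  lobe L <-> exists x y, adj x y /\ forall u w, L u w <-> adj u w /\ edge_cong adj x y u w.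
Proof.
  unfold is_lobe. split; intros (x & y & H1 & H2); exists x, y; split; auto; intros u w;
    rewrite H2, edge_equiv_cong; tauto.
Qed.

Lemma lobe_adj L a b : lobe L -> L a b -> adj a b.
Proof. intros HL H. apply is_lobe_iff in HL as (x & y & _ & H2). apply H2 in H. tauto. Qed.

Lemma lobe_sym L a b : lobe L -> L a b -> L b a.
Proof.
  intros HL H. apply is_lobe_iff in HL as (x & y & _ & H2). apply H2 in H as [H3 H4].
  apply H2. split; auto. apply edge_cong_sym, edge_cong_flip, edge_cong_sym. auto.
Qed.

Lemma lobe_vertex_edge L a b : lobe L -> L a b -> lv L a /\ lv L b.
Proof. intros HL H. split; [exists b; auto|exists a; apply lobe_sym; auto]. Qed.

Lemma lobe_has_vertex L : lobe L -> exists r, lv L r.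
Proof.
  intros HL. apply is_lobe_iff in HL as (x & y & H1 & H2).
  exists x, y. apply H2. split; auto. apply edge_cong_refl.
Qed.

Lemma lobe_of_is_lobe a b : adj a b -> lobe (lobe_of a b) /\ lobe_of a b a b.
Proof.
  intros H. split; [|split; auto; apply edge_cong_refl].
  apply is_lobe_iff. exists a, b. split; auto. intros u w. unfold lobe_of. tauto.
Qed.

Lemma lobe_eq_lobe_of L a b : lobe L -> L a b -> L = lobe_of a b.
Proof.
  intros HL H. apply is_lobe_iff in HL as (x & y & H1 & H2).
  assert (E : edge_cong adj x y a b) by (apply H2 in H; tauto).
  apply functional_extensionality. intros u. apply functional_extensionality. intros w.
  apply propositional_extensionality. rewrite H2. unfold lobe_of.
  split; intros [A B]; split; auto; eapply edge_cong_trans; eauto.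
  apply edge_cong_sym; auto.
Qed.

Lemma lobe_edge_unique L L' a b : lobe L -> lobe L' -> L a b -> L' a b -> L = L'.
Proof. intros H1 H2 H3 H4. rewrite (lobe_eq_lobe_of L a b), (lobe_eq_lobe_of L' a b); auto. Qed.

Lemma lobe_on_cycle L c u w u' w' : lobe L -> simple_cycle adj c ->
  on_cycle c u w -> on_cycle c u' w' -> L u w -> L u' w'.
Proof.
  intros HL Hc Huw Huw' H. apply is_lobe_iff in HL as (x & y & _ & H2).
  apply H2 in H as [_ H]. apply H2. split; [exact (on_cycle_adj adj Hsym c u' w' Hc Huw')|].
  apply (edge_cong_trans adj Hsym Hirr x y u w); [exact H|]. right. exists c. auto.
Qed.

Lemma lobe_clos_rt L a b : lobe L -> lv L a -> lv L b -> clos_refl_trans V L a b.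
Proof.
  intros HL [a' Ha] [b' Hb].
  assert (HL' := HL). apply is_lobe_iff in HL' as (x & y & H1 & H2).
  assert (Hxy : L x y) by (apply H2; split; auto; apply edge_cong_refl).
  assert (K : forall c c', L c c' -> clos_refl_trans V L c x).
  { intros c c' Hc. apply H2 in Hc as [Hc1 Hc2].
    destruct Hc2 as [[[<- <-]|[<- <-]]|(cy & Hcy & Ce1 & Ce2)].
    - apply rt_refl.
    - apply rt_step. apply lobe_sym; auto.
    - assert (Hch : chain L (closed_walk cy)).
      { apply chain_consec. intros u w Huw.
        apply (lobe_on_cycle L cy x y); auto. left; auto. }
      apply (chain_clos_rt L (closed_walk cy)); auto.
      + intros; apply lobe_sym; auto.
      + apply in_closed_walk, (on_cycle_in cy c c' Ce2).
      + apply in_closed_walk, (on_cycle_in cy x y Ce1). }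
  eapply rt_trans; [apply (K a a' Ha)|]. apply clos_rt_sym; [intros; apply lobe_sym; auto|].
  apply (K b b' Hb).
Qed.

Lemma chain_lobe_vertex L x l : lobe L -> chain L (x :: l) -> l <> [] ->
  forall u, In u (x :: l) -> lv L u.
Proof.
  intros HL. revert x. induction l as [|y t IH]; intros x Hc Hne u Hu; [congruence|].
  destruct Hc as [Hxy Hc]. destruct Hu as [->|Hu]; [exists y; auto|].
  destruct t as [|z t].
  - destruct Hu as [->|[]]. exists x. apply lobe_sym; auto.
  - apply (IH y Hc); auto. congruence.
Qed.

Definition off_lobe (L : V -> V -> Prop) : V -> V -> Prop := fun u w => adj u w /\ ~ L u w.

Lemma off_lobe_clos_rt_sym L a b : lobe L ->
  clos_refl_trans V (off_lobe L) a b -> clos_refl_trans V (off_lobe L) b a.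
Proof.
  intros HL. apply clos_rt_sym. intros x y [H1 H2].
  split; auto. intros H. apply H2, lobe_sym; auto.
Qed.

(* A path leaving L at a and re-entering it at b would close, with a path inside L,
   a cycle through edges both in and off L. *)
Lemma off_lobe_separates L a b : lobe L -> lv L a -> lv L b -> a <> b ->
  ~ clos_refl_trans V (off_lobe L) a b.
Proof.
  intros HL Ha Hb Hab Hc.
  destruct (clos_rt_simple_path _ a b Hc Hab) as (l & Hnd & Hch).
  destruct (split_first (lv L) (l ++ [b])) as (A & z & Rest & HE & Hz & HA).
  { exists b. split; auto. apply in_or_app. right. left. auto. }
  rewrite HE in Hnd, Hch.
  change (chain (off_lobe L) ((a :: A) ++ z :: Rest)) in Hch.
  apply chain_app_cons in Hch as [Hch _].
  assert (Haz : a <> z).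
  { intros ->. apply NoDup_cons_iff in Hnd as [Hnd _]. apply Hnd, in_or_app. right. left. auto. }
  destruct (clos_rt_simple_path L z a (lobe_clos_rt L z a HL Hz Ha)) as (Q & HQnd & HQch); [auto|].
  assert (HQlv : forall u, In u (z :: Q ++ [a]) -> lv L u)
    by (apply chain_lobe_vertex; auto; destruct Q; discriminate).
  assert (Hcy : simple_cycle adj (a :: A ++ z :: Q)).
  { apply simple_cycle_of_arcs.
    - eapply chain_mono; [|exact Hch]. intros u w [H _]; auto.
    - eapply chain_mono; [|exact HQch]. intros u w H. eapply lobe_adj; eauto.
    - apply (NoDup_join a z A Q Rest Hnd HQnd). intros u Hu Hu'.
      apply (HA _ Hu), HQlv. right. apply in_or_app. left. auto.
    - destruct (classic (A = [])) as [->|E]; [|auto].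
      destruct (classic (Q = [])) as [->|E']; [|auto]. exfalso.
      simpl in Hch, HQch. destruct Hch as [[_ H1] _]. destruct HQch as [H2 _].
      apply H1, lobe_sym; auto. }
  assert (Hh : exists h, consec (a :: A ++ [z]) a h)
    by (destruct A as [|h A]; [exists z|exists h]; exists []; eexists; reflexivity).
  assert (Hk : exists k, consec (z :: Q ++ [a]) z k)
    by (destruct Q as [|k Q]; [exists a|exists k]; exists []; eexists; reflexivity).
  destruct Hh as (h & Hh). destruct Hk as (k & Hk).
  rewrite chain_consec in Hch, HQch.
  apply (proj2 (Hch a h Hh)), (lobe_on_cycle L (a :: A ++ z :: Q) z k); auto;
    left; apply closed_walk_arcs; auto.
Qed.

End Lobes.

Lemma classic_least_nat (P : nat -> Prop) :
  (exists n, P n) -> exists n, P n /\ forall m, P m -> n <= m.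
Proof.
  intros [n Hn]. revert Hn. induction n as [n IH] using lt_wf_ind. intros Hn.
  destruct (classic (exists m, m < n /\ P m)) as [(m & Hm & Pm)|H]; [exact (IH m Hm Pm)|].
  exists n. split; auto. intros m Pm. destruct (Nat.lt_ge_cases m n); auto.
  exfalso. apply H. eauto.
Qed.

Section BlockTree.
Context {V : Type} (adj : V -> V -> Prop).
Hypothesis Hsym : forall x y, adj x y -> adj y x.
Hypothesis Hirr : forall x, ~ adj x x.
Hypothesis Hconn : connected V adj.
Variable R : V -> V -> Prop.
Hypothesis HR : is_lobe V adj R.

Notation lobe := (is_lobe V adj).
Notation lv := (lobe_vertex V).

Fixpoint walk_len (n : nat) (v r : V) : Prop :=
  match n with 0 => v = r | S n => exists w, adj v w /\ walk_len n w r end.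

Definition reaches_root (n : nat) (v : V) : Prop := exists r, lv R r /\ walk_len n v r.

Lemma depth_ex v : exists n, reaches_root n v /\ forall m, reaches_root m v -> n <= m.
Proof.
  apply classic_least_nat. destruct (lobe_has_vertex adj R HR) as (r & Hr).
  assert (H := Hconn v r). apply clos_rt_rt1n in H.
  induction H as [v|v w r Hvw H IH].
  - exists 0, v. simpl; auto.
  - destruct (IH Hr) as (n & r' & Hr' & Hn). exists (S n), r'. split; auto. exists w. auto.
Qed.

Definition depth (v : V) : nat := proj1_sig (constructive_indefinite_description _ (depth_ex v)).

Lemma depth_spec v : reaches_root (depth v) v /\ forall m, reaches_root m v -> depth v <= m.
Proof. unfold depth. destruct (constructive_indefinite_description _ _) as (n & Hn). exact Hn. Qed.

Lemma depth_zero_iff v : depth v = 0 <-> lv R v.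
Proof.
  split.
  - intros H. destruct (depth_spec v) as [(r & Hr & Hn) _]. rewrite H in Hn. simpl in Hn. now subst.
  - intros H. destruct (depth_spec v) as [_ Hm].
    assert (depth v <= 0) by (apply Hm; exists v; simpl; auto). lia.
Qed.

Lemma depth_adj u w : adj u w -> depth u <= S (depth w).
Proof.
  intros H. destruct (depth_spec w) as [(r & Hr & Hn) _]. apply (proj2 (depth_spec u)).
  exists r. split; auto. exists w. auto.
Qed.

Lemma depth_step v : 0 < depth v -> exists w, adj v w /\ S (depth w) = depth v.
Proof.
  intros H. destruct (depth_spec v) as [(r & Hr & Hn) _].
  destruct (depth v) as [|k] eqn:E; [lia|]. destruct Hn as (w & Hw & Hn).
  exists w. split; auto.
  assert (depth w <= k) by (apply (proj2 (depth_spec w)); exists r; auto).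
  assert (depth v <= S (depth w)) by (apply depth_adj; auto). lia.
Qed.

Lemma attach_ex (L : V -> V -> Prop) :
  exists p, lobe L -> lv L p /\ forall w, lv L w -> depth p <= depth w.
Proof.
  destruct (classic (lobe L)) as [HL|HL].
  - destruct (classic_least_nat (fun n => exists x, lv L x /\ depth x = n))
      as (n & (p & Hp & <-) & Hmin).
    { destruct (lobe_has_vertex adj L HL) as (x & Hx). eauto. }
    exists p. intros _. split; auto. intros w Hw. apply Hmin. eauto.
  - destruct (lobe_has_vertex adj R HR) as (r & _). exists r. tauto.
Qed.

Definition attach (L : V -> V -> Prop) : V :=
  proj1_sig (constructive_indefinite_description _ (attach_ex L)).

Lemma attach_spec L : lobe L -> lv L (attach L) /\ forall w, lv L w -> depth (attach L) <= depth w.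
Proof. unfold attach. destruct (constructive_indefinite_description _ _) as (p & Hp). exact Hp. Qed.

Lemma parent_ex v : exists P, lobe P /\ lv P v /\ (depth v = 0 -> P = R) /\
  (0 < depth v -> exists w, P v w /\ S (depth w) = depth v).
Proof.
  destruct (Nat.eq_dec (depth v) 0) as [E|E].
  - exists R. split; auto. split; [apply depth_zero_iff; auto|]. split; auto. lia.
  - destruct (depth_step v) as (w & Hw & Hd); [lia|].
    destruct (lobe_of_is_lobe adj v w Hw) as [H1 H2].
    exists (lobe_of adj v w). split; auto. split; [exists w; auto|]. split; [lia|]. eauto.
Qed.

Definition parent (v : V) : V -> V -> Prop :=
  proj1_sig (constructive_indefinite_description _ (parent_ex v)).

Lemma parent_spec v : lobe (parent v) /\ lv (parent v) v /\ (depth v = 0 -> parent v = R) /\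
  (0 < depth v -> exists w, parent v v w /\ S (depth w) = depth v).
Proof. unfold parent. destruct (constructive_indefinite_description _ _) as (p & Hp). exact Hp. Qed.

Lemma root_off_lobe L a b : lobe L -> L <> R -> lv R a -> lv R b ->
  clos_refl_trans V (off_lobe adj L) a b.
Proof.
  intros HL HLR Ha Hb. apply (clos_rt_mono R); [|exact (lobe_clos_rt adj Hsym Hirr R a b HR Ha Hb)].
  intros x y H. split; [exact (lobe_adj adj R x y HR H)|].
  intros H'. apply HLR. eapply lobe_edge_unique; eauto.
Qed.

Lemma off_lobe_to_root L y : lobe L -> depth y <= depth (attach L) ->
  exists r, lv R r /\ clos_refl_trans V (off_lobe adj L) y r.
Proof.
  intros HL. remember (depth y) as n eqn:Hy. revert y Hy.
  induction n as [|n IH]; intros y Hy Hn.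
  - exists y. split; [apply depth_zero_iff; auto|apply rt_refl].
  - destruct (depth_step y) as (w & Hw & Hd); [lia|].
    destruct (IH w) as (r & Hr & Hc); [lia|lia|].
    exists r. split; auto. eapply rt_trans; [|exact Hc]. apply rt_step. split; auto.
    intros Hyw. destruct (attach_spec L HL) as [_ Hmin].
    assert (depth (attach L) <= depth w)
      by exact (Hmin w (proj2 (lobe_vertex_edge adj Hsym L y w HL Hyw))).
    lia.
Qed.

(* A path off L from a to x would extend, down to R, across R and up to [attach L],
   to a path off L between two vertices of L. *)
Lemma off_lobe_no_descent L a x : lobe L -> L <> R -> lv L a -> a <> attach L ->
  depth x < depth a -> ~ clos_refl_trans V (off_lobe adj L) a x.
Proof.
  intros HL HLR Ha Hap. destruct (attach_spec L HL) as [Hp Hmin].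
  remember (depth x) as n eqn:En. revert x En.
  induction n as [n IH] using lt_wf_ind. intros x En Hlt Hc.
  destruct (Nat.eq_dec n 0) as [E|E].
  - subst n. assert (Hx : lv R x) by (apply depth_zero_iff; auto).
    destruct (off_lobe_to_root L (attach L) HL (le_n _)) as (r & Hr & Hpr).
    apply (off_lobe_separates adj Hsym Hirr L a (attach L) HL Ha Hp Hap).
    eapply rt_trans; [exact Hc|]. eapply rt_trans; [apply (root_off_lobe L x r HL HLR Hx Hr)|].
    apply off_lobe_clos_rt_sym; auto.
  - destruct (depth_step x) as (w & Hw & Hd); [lia|].
    destruct (classic (L x w)) as [Hxw|Hxw].
    + destruct (classic (a = x)) as [->|Hax]; [lia|].
      exact (off_lobe_separates adj Hsym Hirr L a x HL Ha
               (proj1 (lobe_vertex_edge adj Hsym L x w HL Hxw)) Hax Hc).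
    + apply (IH (depth w) ltac:(lia) w eq_refl ltac:(lia)).
      eapply rt_trans; [exact Hc|]. apply rt_step. split; auto.
Qed.

Lemma attach_of_non_parent v L : lobe L -> lv L v -> L <> parent v -> L <> R /\ attach L = v.
Proof.
  intros HL Hv Hne. destruct (parent_spec v) as (HP & HPv & HP0 & HPs).
  destruct (attach_spec L HL) as [Hp Hmin].
  destruct (Nat.eq_dec (depth v) 0) as [E|E].
  - assert (HLR : L <> R) by (rewrite <- (HP0 E); auto). split; auto.
    apply NNPP. intros Hpv.
    assert (Hp0 : depth (attach L) = 0) by (specialize (Hmin v Hv); lia).
    apply (off_lobe_separates adj Hsym Hirr L v (attach L) HL Hv Hp (fun h => Hpv (eq_sym h))).
    apply root_off_lobe; auto; apply depth_zero_iff; auto.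
  - assert (HLR : L <> R) by (intros ->; apply E, depth_zero_iff; auto).
    split; auto. apply NNPP. intros Hpv.
    destruct (HPs ltac:(lia)) as (w & Hw & Hd).
    destruct (classic (L v w)) as [Hvw|Hvw].
    + apply Hne. eapply lobe_edge_unique; eauto.
    + apply (off_lobe_no_descent L v w HL HLR Hv (fun h => Hpv (eq_sym h))); [lia|].
      apply rt_step. split; auto. eapply lobe_adj; eauto.
Qed.

Lemma parent_root v : lv R v -> parent v = R.
Proof. intros H. apply (proj1 (proj2 (proj2 (parent_spec v)))), depth_zero_iff, H. Qed.

Lemma parent_attach v : parent v <> R ->
  attach (parent v) <> v /\ depth (attach (parent v)) < depth v.
Proof.
  intros Hne. destruct (parent_spec v) as (HP & HPv & HP0 & HPs).
  destruct (Nat.eq_dec (depth v) 0) as [E|E]; [exfalso; auto|].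
  destruct (HPs ltac:(lia)) as (w & Hw & Hd).
  destruct (attach_spec _ HP) as [_ Hmin].
  assert (depth (attach (parent v)) <= depth w)
    by exact (Hmin w (proj2 (lobe_vertex_edge adj Hsym _ v w HP Hw))).
  split; [intros Heq; rewrite Heq in *; lia|lia].
Qed.

End BlockTree.

Section Automorphisms.
Context {V : Type} (adj : V -> V -> Prop).

Notation lobe := (is_lobe V adj).
Notation lv := (lobe_vertex V).
Notation aut := (is_aut V adj).

Lemma aut_id : aut (fun x => x).
Proof. split; [intros y; exists y; auto|split; [auto|tauto]]. Qed.

Lemma aut_comp f g : aut f -> aut g -> aut (fun x => f (g x)).
Proof.
  intros (F1 & F2 & F3) (G1 & G2 & G3). split; [|split].
  - intros y. destruct (F1 y) as (z & <-). destruct (G1 z) as (x & <-). eauto.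
  - intros x y H. auto.
  - intros x y. rewrite G3, F3. tauto.
Qed.

Lemma aut_inverse f : aut f ->
  exists g, aut g /\ (forall x, f (g x) = x) /\ (forall x, g (f x) = x).
Proof.
  intros (F1 & F2 & F3). destruct (choice (fun y x => f x = y) F1) as (g & Hg).
  assert (Hgf : forall x, g (f x) = x) by (intros x; apply F2; rewrite Hg; auto).
  exists g. split; [|split; auto]. split; [|split].
  - intros y. exists (f y). auto.
  - intros x y H. rewrite <- (Hg x), <- (Hg y), H. auto.
  - intros x y. rewrite (F3 (g x) (g y)), !Hg. tauto.
Qed.

Lemma aut_orbit_sym u v : aut_orbit V adj u v -> aut_orbit V adj v u.
Proof. intros (f & Hf & <-). destruct (aut_inverse f Hf) as (g & Hg & H1 & H2). exists g. auto. Qed.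

Lemma aut_orbit_trans u v w :
  aut_orbit V adj u v -> aut_orbit V adj v w -> aut_orbit V adj u w.
Proof.
  intros (f & Hf & <-) (g & Hg & <-). exists (fun x => g (f x)). split; auto. apply aut_comp; auto.
Qed.

Lemma stab_orbit_refl L0 u : stab_orbit V adj L0 u u.
Proof. exists (fun x => x). split; [apply aut_id|]. split; auto. intros x y; tauto. Qed.

Lemma stab_orbit_sym L0 u v : stab_orbit V adj L0 u v -> stab_orbit V adj L0 v u.
Proof.
  intros (f & Hf & Hm & <-). destruct (aut_inverse f Hf) as (g & Hg & H1 & H2).
  exists g. split; auto. split; auto. intros x y. rewrite (Hm (g x) (g y)), !H1. tauto.
Qed.

Lemma stab_orbit_trans L0 u v w :
  stab_orbit V adj L0 u v -> stab_orbit V adj L0 v w -> stab_orbit V adj L0 u w.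
Proof.
  intros (f & Hf & Hm & <-) (g & Hg & Hm' & <-). exists (fun x => g (f x)).
  split; [apply aut_comp; auto|]. split; auto.
  intros x y. rewrite (Hm x y), (Hm' (f x) (f y)). tauto.
Qed.

Lemma stab_orbit_lobe_vertex L0 u v : stab_orbit V adj L0 u v -> lv L0 u -> lv L0 v.
Proof. intros (f & Hf & Hm & <-) (w & Hw). exists (f w). apply (proj1 (Hm u w)). exact Hw. Qed.

Lemma stab_orbit_ext L0 a b :
  stab_orbit V adj L0 a = stab_orbit V adj L0 b <-> stab_orbit V adj L0 a b.
Proof.
  split.
  - intros E. rewrite E. apply stab_orbit_refl.
  - intros H. apply functional_extensionality. intros x. apply propositional_extensionality.
    split; intros H'; [eapply stab_orbit_trans; [apply stab_orbit_sym|]|eapply stab_orbit_trans];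
      eauto.
Qed.

Lemma closed_walk_map (f : V -> V) c : closed_walk (map f c) = map f (closed_walk c).
Proof. destruct c; simpl; auto. now rewrite map_app. Qed.

Lemma edge_cong_aut f x y u w : aut f ->
  edge_cong adj x y u w -> edge_cong adj (f x) (f y) (f u) (f w).
Proof.
  intros (F1 & F2 & F3) [[[-> ->]|[-> ->]]|(c & (H1 & H2 & H3) & H4 & H5)];
    [left; left; auto|left; right; auto|].
  assert (Hmap : forall a b, on_cycle c a b -> on_cycle (map f c) (f a) (f b)).
  { unfold on_cycle. rewrite closed_walk_map.
    intros a b [H|H]; [left|right]; apply consec_map; auto. }
  right. exists (map f c). split; [split; [|split]|split; auto].
  - rewrite length_map. auto.
  - apply NoDup_map_NoDup_ForallPairs; auto. intros a b _ _. auto.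
  - rewrite closed_walk_map. eapply chain_map; [|exact H3]. intros a b. apply F3.
Qed.

Definition lobe_image (f : V -> V) (L : V -> V -> Prop) : V -> V -> Prop :=
  fun a b => exists x y, f x = a /\ f y = b /\ L x y.

Lemma lobe_image_app f L x y : aut f -> (lobe_image f L (f x) (f y) <-> L x y).
Proof.
  intros (F1 & F2 & F3). split.
  - intros (x' & y' & E1 & E2 & H). apply F2 in E1, E2. subst. auto.
  - intros H. exists x, y. auto.
Qed.

Lemma lobe_image_is_lobe f L : aut f -> lobe L -> lobe (lobe_image f L).
Proof.
  intros Hf HL. apply is_lobe_iff in HL as (x & y & H1 & H2). apply is_lobe_iff.
  exists (f x), (f y). split; [apply (proj2 (proj2 Hf) x y), H1|].
  destruct (aut_inverse f Hf) as (g & Hg & G1 & G2).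
  intros a b. rewrite <- (G1 a), <- (G1 b), lobe_image_app, H2 by auto.
  rewrite <- (proj2 (proj2 Hf) (g a) (g b)). split; intros [A B]; split; auto.
  - apply edge_cong_aut; auto.
  - apply (edge_cong_aut g) in B; auto. rewrite !G2 in B. auto.
Qed.

Lemma lobe_image_cancel f g L : (forall x, f (g x) = x) -> (forall x, g (f x) = x) ->
  lobe_image f (lobe_image g L) = L.
Proof.
  intros H1 H2. apply functional_extensionality; intros a.
  apply functional_extensionality; intros b. apply propositional_extensionality. split.
  - intros (x & y & <- & <- & (x' & y' & <- & <- & H)). rewrite !H1. auto.
  - intros H. exists (g a), (g b). split; auto. split; auto. exists a, b. auto.
Qed.

Lemma lobe_image_inj f L L' : aut f -> lobe_image f L = lobe_image f L' -> L = L'.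
Proof.
  intros Hf E. apply functional_extensionality; intros a.
  apply functional_extensionality; intros b. apply propositional_extensionality.
  rewrite <- (lobe_image_app f L a b Hf), <- (lobe_image_app f L' a b Hf), E. tauto.
Qed.

Lemma aut_lobe_iso f L L' : aut f -> maps_lobe V f L L' -> lobe_iso V L L' f.
Proof.
  intros (F1 & F2 & F3) Hm. split; [|split; [|split]].
  - intros v (w & Hw). exists (f w). apply Hm. auto.
  - intros v w _ _. auto.
  - intros u (w & Hw). destruct (F1 u) as (v & <-). destruct (F1 w) as (w' & <-).
    exists v. split; auto. exists w'. apply Hm. auto.
  - intros v w _ _. apply Hm.
Qed.

End Automorphisms.

Section LobeIsomorphisms.
Context {V : Type}.

Notation lv := (lobe_vertex V).

Lemma lobe_iso_comp A B C s t :
  lobe_iso V A B s -> lobe_iso V B C t -> lobe_iso V A C (fun x => t (s x)).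
Proof.
  intros (S1 & S2 & S3 & S4) (T1 & T2 & T3 & T4). split; [|split; [|split]].
  - auto.
  - intros v w Hv Hw H. apply S2; auto.
  - intros u Hu. destruct (T3 u Hu) as (w & Hw & <-). destruct (S3 w Hw) as (v & Hv & <-). eauto.
  - intros v w Hv Hw. rewrite S4, T4; auto. tauto.
Qed.

Lemma lobe_iso_inv A B s t : lobe_iso V A B s ->
  (forall v, lv B v -> lv A (t v) /\ s (t v) = v) ->
  lobe_iso V B A t /\ (forall x, lv A x -> t (s x) = x).
Proof.
  intros (S1 & S2 & S3 & S4) Ht.
  assert (K : forall x, lv A x -> t (s x) = x).
  { intros x Hx. destruct (Ht (s x) (S1 x Hx)) as [H1 H2]. apply S2; auto. }
  split; auto. split; [|split; [|split]].
  - intros v Hv. apply Ht; auto.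
  - intros v w Hv Hw H. rewrite <- (proj2 (Ht v Hv)), <- (proj2 (Ht w Hw)), H. auto.
  - intros u Hu. exists (s u). split; auto.
  - intros v w Hv Hw. destruct (Ht v Hv) as [A1 A2]. destruct (Ht w Hw) as [B1 B2].
    rewrite (S4 (t v) (t w)), A2, B2 by auto. tauto.
Qed.

End LobeIsomorphisms.

Section Forward.
Context {V : Type} (adj : V -> V -> Prop).
Variable L0 : V -> V -> Prop.
Hypothesis HL0 : is_lobe V adj L0.

Notation lobe := (is_lobe V adj).
Notation aut := (is_aut V adj).

Variable sigma : (V -> V -> Prop) -> V -> V.
Hypothesis Hsigma : forall L, lobe L -> aut (sigma L) /\ maps_lobe V (sigma L) L0 L.

Lemma tau_set_image h u q L : aut h ->
  tau_set adj L0 sigma q u L -> tau_set adj L0 sigma q (h u) (lobe_image h L).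
Proof.
  intros Hh (HL & x & Hx & <-).
  assert (HL' : lobe (lobe_image h L)) by (apply lobe_image_is_lobe; auto).
  destruct (Hsigma L HL) as [Hs Hsm]. destruct (Hsigma _ HL') as [Hs' Hsm'].
  destruct (aut_inverse adj _ Hs') as (t & Ht & T1 & T2).
  split; auto. exists (t (h (sigma L x))). split; [|apply T1].
  eapply stab_orbit_trans; [exact Hx|]. exists (fun z => t (h (sigma L z))). split.
  - apply aut_comp; [exact Ht|]. apply aut_comp; assumption.
  - split; auto. intros a b. rewrite (Hsm a b), <- (lobe_image_app adj h L _ _ Hh).
    rewrite (Hsm' (t (h (sigma L a))) (t (h (sigma L b)))), !T1. tauto.
Qed.

Lemma tau_set_base q : tau_set adj L0 sigma q q L0.
Proof.
  destruct (Hsigma L0 HL0) as [Hs Hsm]. destruct (aut_inverse adj _ Hs) as (t & Ht & T1 & T2).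
  split; auto. exists (t q). split; auto. exists t. split; auto. split; auto.
  intros a b. rewrite (Hsm (t a) (t b)), !T1. tauto.
Qed.

Lemma tau_sets_aut_invariant q :
  (forall u w, aut_orbit V adj u w ->
     equinumerous (tau_set adj L0 sigma q u) (tau_set adj L0 sigma q w)) /\
  (forall v, (exists L, tau_set adj L0 sigma q v L) <-> aut_orbit V adj q v).
Proof.
  split.
  - intros u w (h & Hh & <-). destruct (aut_inverse adj h Hh) as (k & Hk & K1 & K2).
    exists (lobe_image h). split; [|split].
    + intros L HL. apply tau_set_image; auto.
    + intros L1 L2 _ _ E. exact (lobe_image_inj adj h L1 L2 Hh E).
    + intros L' HL'. exists (lobe_image k L'). split; [|apply lobe_image_cancel; auto].
      rewrite <- (K2 u). apply tau_set_image; auto.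
  - intros v. split.
    + intros (L & HL & x & (g & Hg & Hgm & <-) & <-). exists (fun z => sigma L (g z)).
      split; auto. apply aut_comp; auto. apply Hsigma; auto.
    + intros (h & Hh & <-). exists (lobe_image h L0). apply tau_set_image; auto.
      apply tau_set_base.
Qed.

End Forward.

Lemma lobe_transitive_conditions {V} (adj : V -> V -> Prop) (L0 : V -> V -> Prop) :
  is_lobe V adj L0 -> lobe_transitive V adj ->
  exists sigma : (V -> V -> Prop) -> V -> V,
    (forall L, is_lobe V adj L -> lobe_iso V L0 L (sigma L)) /\
    (forall q, lobe_vertex V L0 q ->
       (forall u w, aut_orbit V adj u w ->
          equinumerous (tau_set adj L0 sigma q u) (tau_set adj L0 sigma q w)) /\
       (forall v, (exists L, tau_set adj L0 sigma q v L) <-> aut_orbit V adj q v)).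
Proof.
  intros HL0 Hlt.
  destruct (choice (fun L s => is_lobe V adj L -> is_aut V adj s /\ maps_lobe V s L0 L))
    as (sigma & Hs).
  { intros L. destruct (classic (is_lobe V adj L)) as [HL|HL].
    - destruct (Hlt L0 L HL0 HL) as (f & Hf & Hm). eauto.
    - exists (fun x => x). tauto. }
  exists sigma. split.
  - intros L HL. destruct (Hs L HL). apply (aut_lobe_iso adj); auto.
  - intros q _. apply (tau_sets_aut_invariant adj L0 HL0 sigma Hs q).
Qed.

Lemma equinumerous_empty {X : Type} (A B : X -> Prop) :
  (forall a, ~ A a) -> (forall b, ~ B b) -> equinumerous A B.
Proof.
  intros HA HB. exists (fun x => x).
  split; [|split]; [intros a Ha|intros a1 a2 Ha|intros b Hb]; exfalso; firstorder.
Qed.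

Lemma equinumerous_remove {X : Type} (A B : X -> Prop) a b :
  equinumerous A B -> (A a <-> B b) ->
  equinumerous (fun x => A x /\ x <> a) (fun y => B y /\ y <> b).
Proof.
  intros (f & F1 & F2 & F3) Hab. destruct (classic (A a)) as [Ha|Ha].
  - (* a0, the preimage of b, takes over the image of a *)
    assert (Hb : B b) by tauto. destruct (F3 b Hb) as (a0 & Ha0 & Ea0).
    exists (fun x => if excluded_middle_informative (x = a0) then f a else f x).
    split; [|split].
    + intros x [Hx Hxa]. destruct (excluded_middle_informative (x = a0)) as [->|E].
      * split; auto. intros E'. apply Hxa. apply F2; auto. congruence.
      * split; auto. intros E'. apply E. apply F2; auto. congruence.
    + intros x1 x2 [H1 H1a] [H2 H2a].
      destruct (excluded_middle_informative (x1 = a0)) as [->|E1];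
      destruct (excluded_middle_informative (x2 = a0)) as [->|E2]; intros E.
      * reflexivity.
      * exfalso. apply H2a. apply F2; auto.
      * exfalso. apply H1a. apply F2; auto.
      * apply F2; auto.
    + intros y [Hy Hyb]. destruct (F3 y Hy) as (x & Hx & <-).
      destruct (classic (x = a)) as [->|Hxa].
      * exists a0. split.
        -- split; auto. intros ->. congruence.
        -- destruct (excluded_middle_informative (a0 = a0)); congruence.
      * exists x. split; auto. destruct (excluded_middle_informative (x = a0)) as [->|]; congruence.
  - assert (Hb : ~ B b) by tauto. exists f. split; [|split].
    + intros x [Hx Hxa]. split; auto. intros E. apply Hb. rewrite <- E. auto.
    + intros x1 x2 [H1 _] [H2 _]. auto.
    + intros y [Hy Hyb]. destruct (F3 y Hy) as (x & Hx & <-). exists x. split; auto.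
      split; auto. intros ->. auto.
Qed.

Lemma equinumerous_fibers {X Y : Type} (A B : X -> Prop) (tA tB : X -> Y) :
  (forall y, equinumerous (fun a => A a /\ tA a = y) (fun b => B b /\ tB b = y)) ->
  exists f, (forall a, A a -> B (f a) /\ tB (f a) = tA a) /\
    (forall a1 a2, A a1 -> A a2 -> f a1 = f a2 -> a1 = a2) /\
    (forall b, B b -> exists a, A a /\ f a = b).
Proof.
  intros H. destruct (choice _ H) as (h & Hh).
  exists (fun a => h (tA a) a). split; [|split].
  - intros a Ha. destruct (Hh (tA a)) as (H1 & _). apply H1. auto.
  - intros a1 a2 Ha1 Ha2 E.
    destruct (Hh (tA a1)) as (H1 & _). destruct (H1 a1) as [_ E1]; [auto|].
    destruct (Hh (tA a2)) as (H2 & _). destruct (H2 a2) as [_ E2]; [auto|].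
    assert (Et : tA a1 = tA a2) by congruence.
    destruct (Hh (tA a1)) as (_ & Hinj & _). apply Hinj; auto. rewrite Et at 2. exact E.
  - intros b Hb. destruct (Hh (tB b)) as (_ & _ & Hs).
    destruct (Hs b) as (a & [Ha Et] & <-); [auto|]. exists a. rewrite Et. auto.
Qed.

Section Transport.
Context {V : Type} (adj : V -> V -> Prop).
Variable L0 : V -> V -> Prop.

Notation lobe := (is_lobe V adj).
Notation lv := (lobe_vertex V).
Notation aut := (is_aut V adj).
Notation tau := (tau_set adj L0).

Variable sigma : (V -> V -> Prop) -> V -> V.
Hypothesis Hsigma : forall L, lobe L -> lobe_iso V L0 L (sigma L).
Hypothesis Htau_card : forall q, lv L0 q -> forall u w, aut_orbit V adj u w ->
  equinumerous (tau sigma q u) (tau sigma q w).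
Hypothesis Htau_orbit : forall q, lv L0 q ->
  forall v, (exists L, tau sigma q v L) <-> aut_orbit V adj q v.

Lemma sigma_inv_ex L : exists t, lobe L -> forall v, lv L v -> lv L0 (t v) /\ sigma L (t v) = v.
Proof.
  destruct (classic (lobe L)) as [HL|HL]; [|exists (fun x => x); tauto].
  destruct (Hsigma L HL) as (_ & _ & Hsurj & _).
  destruct (choice (fun v x => lv L v -> lv L0 x /\ sigma L x = v)) as (t & Ht).
  - intros v. destruct (classic (lv L v)) as [Hv|Hv]; [|exists v; tauto].
    destruct (Hsurj v Hv) as (x & Hx & <-). eauto.
  - exists t. auto.
Qed.

Definition sigma_inv (L : V -> V -> Prop) : V -> V :=
  proj1_sig (constructive_indefinite_description _ (sigma_inv_ex L)).

Lemma sigma_inv_spec L : lobe L ->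
  forall v, lv L v -> lv L0 (sigma_inv L v) /\ sigma L (sigma_inv L v) = v.
Proof.
  unfold sigma_inv. destruct (constructive_indefinite_description _ _) as (t & Ht). exact Ht.
Qed.

Lemma sigma_inv_iso L : lobe L ->
  lobe_iso V L L0 (sigma_inv L) /\ (forall x, lv L0 x -> sigma_inv L (sigma L x) = x).
Proof.
  intros HL. apply (lobe_iso_inv L0 L (sigma L)); [apply Hsigma|apply sigma_inv_spec]; auto.
Qed.

Definition in_stab (g : V -> V) : Prop := aut g /\ maps_lobe V g L0 L0.

Lemma in_stab_lobe_vertex g x : in_stab g -> lv L0 x -> lv L0 (g x).
Proof. intros [Hg Hm] (w & Hw). exists (g w). apply (proj1 (Hm x w)). exact Hw. Qed.

Definition transport (Psi : (V -> V -> Prop) -> V -> V -> Prop)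
  (G : (V -> V -> Prop) -> V -> V) (L : V -> V -> Prop) (x : V) : V :=
  sigma (Psi L) (G L (sigma_inv L x)).

Lemma transport_ext Psi G Psi' G' L x : Psi L = Psi' L -> G L = G' L ->
  transport Psi G L x = transport Psi' G' L x.
Proof. intros E1 E2. unfold transport. rewrite E1, E2. reflexivity. Qed.

Lemma transport_iso Psi G L : lobe L -> lobe (Psi L) -> in_stab (G L) ->
  lobe_iso V L (Psi L) (transport Psi G L).
Proof.
  intros HL HP [Hg Hm]. unfold transport.
  apply (lobe_iso_comp L L0 (Psi L) (fun x => G L (sigma_inv L x))); [|apply Hsigma; auto].
  apply (lobe_iso_comp L L0 L0 (sigma_inv L) (G L)); [apply sigma_inv_iso; auto|].
  apply (aut_lobe_iso adj); auto.
Qed.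

Lemma tau_set_intro q v L x : lobe L -> stab_orbit V adj L0 q x -> sigma L x = v -> tau sigma q v L.
Proof. intros HL Hx Hv. split; auto. exists x. auto. Qed.

Lemma transport_aut_orbit Psi G L v : lobe L -> lobe (Psi L) -> in_stab (G L) -> lv L v ->
  aut_orbit V adj v (transport Psi G L v).
Proof.
  intros HL HP HG Hv. destruct (sigma_inv_spec L HL v Hv) as [Hz Hsz].
  set (z := sigma_inv L v) in *.
  assert (O1 : aut_orbit V adj z v).
  { apply (Htau_orbit z Hz). exists L.
    exact (tau_set_intro z v L z HL (stab_orbit_refl adj L0 z) Hsz). }
  assert (O2 : aut_orbit V adj z (transport Psi G L v)).
  { apply (Htau_orbit z Hz). exists (Psi L).
    apply (tau_set_intro z _ (Psi L) (G L z) HP); [|reflexivity].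
    destruct HG as [Hg Hm]. exists (G L). auto. }
  exact (aut_orbit_trans adj _ _ _ (aut_orbit_sym adj _ _ O1) O2).
Qed.

Lemma transport_stab_orbit Psi G L v : lobe L -> lobe (Psi L) -> in_stab (G L) -> lv L v ->
  stab_orbit V adj L0 (sigma_inv L v) (sigma_inv (Psi L) (transport Psi G L v)).
Proof.
  intros HL HP HG Hv. destruct (sigma_inv_spec L HL v Hv) as [Hz Hsz].
  unfold transport. rewrite (proj2 (sigma_inv_iso _ HP)) by (apply in_stab_lobe_vertex; auto).
  destruct HG as [Hg Hm]. exists (G L). auto.
Qed.

Lemma tau_set_iff q v L : lv L0 q -> lobe L -> lv L v ->
  (tau sigma q v L <-> stab_orbit V adj L0 q (sigma_inv L v)).
Proof.
  intros Hq HL Hv. split.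
  - intros (_ & x & Hx & <-).
    rewrite (proj2 (sigma_inv_iso L HL)); [auto|eapply stab_orbit_lobe_vertex; eauto].
  - intros H. apply (tau_set_intro q v L (sigma_inv L v) HL H), sigma_inv_spec; auto.
Qed.

Lemma tau_set_lobe_vertex q v L : lv L0 q -> tau sigma q v L -> lv L v.
Proof.
  intros Hq (HL & x & Hx & <-). apply (Hsigma L HL). eapply stab_orbit_lobe_vertex; eauto.
Qed.

Definition child_of (v : V) (P : V -> V -> Prop) (L : V -> V -> Prop) : Prop :=
  lobe L /\ lv L v /\ L <> P.

Lemma child_type_fiber v P r : lv L0 r ->
  (fun L => child_of v P L /\ stab_orbit V adj L0 (sigma_inv L v) = stab_orbit V adj L0 r) =
  (fun L => tau sigma r v L /\ L <> P).
Proof.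
  intros Hr. apply functional_extensionality. intros L. apply propositional_extensionality. split.
  - intros ((HL & HLv & HLP) & E). split; auto.
    apply tau_set_iff; auto. apply stab_orbit_sym, stab_orbit_ext, E.
  - intros (HT & HLP). assert (HLv := tau_set_lobe_vertex r v L Hr HT).
    split; [split; [apply HT|auto]|].
    apply stab_orbit_ext, stab_orbit_sym, tau_set_iff; auto. apply HT.
Qed.

(* Condition (a) gives, for every S-orbit type, as many child lobes of that type at v as at v';
   the parent lobes P, P' have the same type and are removed on both sides. *)
Lemma child_bijection v v' P P' : lobe P -> lv P v -> lobe P' -> lv P' v' ->
  aut_orbit V adj v v' -> stab_orbit V adj L0 (sigma_inv P v) (sigma_inv P' v') ->
  exists beta, (forall L, child_of v P L -> child_of v' P' (beta L) /\
                  stab_orbit V adj L0 (sigma_inv L v) (sigma_inv (beta L) v')) /\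
    (forall L1 L2, child_of v P L1 -> child_of v P L2 -> beta L1 = beta L2 -> L1 = L2) /\
    (forall M, child_of v' P' M -> exists L, child_of v P L /\ beta L = M).
Proof.
  intros HP HPv HP' HPv' Hvv' Hst.
  destruct (equinumerous_fibers (child_of v P) (child_of v' P')
              (fun L => stab_orbit V adj L0 (sigma_inv L v))
              (fun M => stab_orbit V adj L0 (sigma_inv M v'))) as (beta & B1 & B2 & B3).
  - intros y. destruct (classic (exists r, lv L0 r /\ y = stab_orbit V adj L0 r))
      as [(r & Hr & ->)|Hy].
    + rewrite !child_type_fiber by exact Hr.
      apply equinumerous_remove; [apply Htau_card; auto|].
      rewrite (tau_set_iff r v P), (tau_set_iff r v' P') by auto.
      split; intros H; eapply stab_orbit_trans; eauto using stab_orbit_sym.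
    + apply equinumerous_empty; intros L ((HL & HLv & _) & E); apply Hy.
      * exists (sigma_inv L v). split; [apply sigma_inv_spec; auto|symmetry; exact E].
      * exists (sigma_inv L v'). split; [apply sigma_inv_spec; auto|symmetry; exact E].
  - exists beta. split; [|split; auto].
    intros L HL. destruct (B1 L HL) as [HbL E]. split; auto.
    apply stab_orbit_sym, stab_orbit_ext, E.
Qed.

Definition child_match v v' P P' (beta : (V -> V -> Prop) -> V -> V -> Prop)
  (gg : (V -> V -> Prop) -> V -> V) : Prop :=
  (forall L, child_of v P L -> child_of v' P' (beta L) /\ in_stab (gg L) /\
     sigma (beta L) (gg L (sigma_inv L v)) = v') /\
  (forall L1 L2, child_of v P L1 -> child_of v P L2 -> beta L1 = beta L2 -> L1 = L2) /\
  (forall M, child_of v' P' M -> exists L, child_of v P L /\ beta L = M).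

Lemma children_match v v' P P' : lobe P -> lv P v -> lobe P' -> lv P' v' ->
  aut_orbit V adj v v' -> stab_orbit V adj L0 (sigma_inv P v) (sigma_inv P' v') ->
  exists beta gg, child_match v v' P P' beta gg.
Proof.
  intros HP HPv HP' HPv' Hvv' Hst.
  destruct (child_bijection v v' P P' HP HPv HP' HPv' Hvv' Hst) as (beta & B1 & B2 & B3).
  destruct (choice (fun L g => child_of v P L ->
              in_stab g /\ g (sigma_inv L v) = sigma_inv (beta L) v')) as (gg & Hgg).
  { intros L. destruct (classic (child_of v P L)) as [HL|HL]; [|exists (fun x => x); tauto].
    destruct (proj2 (B1 L HL)) as (g & Hg & Hgm & Hgz). exists g. split; [split|]; auto. }
  exists beta, gg. split; [|split; auto].
  intros L HL. destruct (B1 L HL) as [HbL _]. destruct (Hgg L HL) as [Hg ->].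
  split; [|split]; auto. apply sigma_inv_spec; apply HbL.
Qed.

End Transport.

Section Construction.
Context {V : Type} (adj : V -> V -> Prop).
Hypothesis Hsym : forall x y, adj x y -> adj y x.
Hypothesis Hirr : forall x, ~ adj x x.
Hypothesis Hconn : connected V adj.
Variable L0 : V -> V -> Prop.

Notation lobe := (is_lobe V adj).
Notation lv := (lobe_vertex V).
Notation Lb := (V -> V -> Prop).

Variable sigma : Lb -> V -> V.
Hypothesis Hsigma : forall L, lobe L -> lobe_iso V L0 L (sigma L).
Hypothesis Htau_card : forall q, lv L0 q -> forall u w, aut_orbit V adj u w ->
  equinumerous (tau_set adj L0 sigma q u) (tau_set adj L0 sigma q w).
Hypothesis Htau_orbit : forall q, lv L0 q ->
  forall v, (exists L, tau_set adj L0 sigma q v L) <-> aut_orbit V adj q v.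

Variables L1 L2 : Lb.
Hypothesis HL1 : lobe L1.
Hypothesis HL2 : lobe L2.

Notation sigma_inv := (sigma_inv adj L0 sigma Hsigma).
Notation transport := (transport adj L0 sigma Hsigma).
Notation transport_ext := (transport_ext adj L0 sigma Hsigma).
Notation in_stab := (in_stab adj L0).
Notation child_of := (child_of adj).
Notation depth1 := (depth adj Hconn L1 HL1).
Notation attach1 := (attach adj Hconn L1 HL1).
Notation parent1 := (parent adj Hconn L1 HL1).
Notation depth2 := (depth adj Hconn L2 HL2).
Notation attach2 := (attach adj Hconn L2 HL2).
Notation parent2 := (parent adj Hconn L2 HL2).

Lemma child1_attach v L : child_of v (parent1 v) L -> L <> L1 /\ attach1 L = v.
Proof.
  intros (HL & Hv & HP). exact (attach_of_non_parent adj Hsym Hirr Hconn L1 HL1 v L HL Hv HP).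
Qed.

Lemma child2_attach v L : child_of v (parent2 v) L -> L <> L2 /\ attach2 L = v.
Proof.
  intros (HL & Hv & HP). exact (attach_of_non_parent adj Hsym Hirr Hconn L2 HL2 v L HL Hv HP).
Qed.

Lemma parent1_spec v : lobe (parent1 v) /\ lv (parent1 v) v.
Proof. destruct (parent_spec adj Hconn L1 HL1 v) as (A & B & _). auto. Qed.

Lemma parent2_spec v : lobe (parent2 v) /\ lv (parent2 v) v.
Proof. destruct (parent_spec adj Hconn L2 HL2 v) as (A & B & _). auto. Qed.

Lemma attach1_spec L : lobe L -> lv L (attach1 L).
Proof. intros HL. apply (attach_spec adj Hconn L1 HL1 L HL). Qed.

Lemma attach2_spec L : lobe L -> lv L (attach2 L).
Proof. intros HL. apply (attach_spec adj Hconn L2 HL2 L HL). Qed.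

Lemma parent1_attach v : parent1 v <> L1 ->
  attach1 (parent1 v) <> v /\ depth1 (attach1 (parent1 v)) < depth1 v.
Proof. apply parent_attach; auto. Qed.

Lemma parent2_attach v : parent2 v <> L2 ->
  attach2 (parent2 v) <> v /\ depth2 (attach2 (parent2 v)) < depth2 v.
Proof. apply parent_attach; auto. Qed.

Lemma child1_of_attach L : lobe L -> L <> L1 -> child_of (attach1 L) (parent1 (attach1 L)) L.
Proof.
  intros HL HL1'. split; auto. split; [apply attach1_spec; auto|]. intros Hpar.
  destruct (parent1_attach (attach1 L)) as [Hne _]; [rewrite <- Hpar; auto|].
  apply Hne. rewrite <- Hpar. reflexivity.
Qed.

(* Psi L is the image of the lobe L and G L the element of the stabiliser of L0 through
   which [transport Psi G L] maps L onto it; a lobe other than L1 must be attached at the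
   image of its attachment vertex, which its parent lobe maps in the same way. *)
Definition lobe_ok (Psi : Lb -> Lb) (G : Lb -> V -> V) (L : Lb) : Prop :=
  lobe (Psi L) /\ in_stab (G L) /\ (L = L1 -> Psi L = L2) /\
  (L <> L1 -> Psi L <> L2 /\ attach2 (Psi L) = transport Psi G L (attach1 L) /\
              transport Psi G L (attach1 L) = transport Psi G (parent1 (attach1 L)) (attach1 L)).

Definition vmap (Psi : Lb -> Lb) (G : Lb -> V -> V) (v : V) : V := transport Psi G (parent1 v) v.

Definition vertex_ok (Psi : Lb -> Lb) (G : Lb -> V -> V) (v : V) : Prop :=
  (forall La Lb, child_of v (parent1 v) La -> child_of v (parent1 v) Lb ->
     Psi La = Psi Lb -> La = Lb) /\
  (forall M, child_of (vmap Psi G v) (parent2 (vmap Psi G v)) M ->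
     exists L, child_of v (parent1 v) L /\ Psi L = M).

Definition settled (n : nat) (L : Lb) : Prop := L = L1 \/ depth1 (attach1 L) < n.

Definition stage_inv (n : nat) (Psi : Lb -> Lb) (G : Lb -> V -> V) : Prop :=
  (forall L, lobe L -> settled n L -> lobe_ok Psi G L) /\
  (forall v, depth1 v < n -> vertex_ok Psi G v).

Definition agree_on (n : nat) (Psi : Lb -> Lb) (G : Lb -> V -> V) Psi' G' : Prop :=
  forall L, settled n L -> Psi L = Psi' L /\ G L = G' L.

Lemma settled_mono n m L : settled n L -> n <= m -> settled m L.
Proof. intros [H|H] Hnm; [left|right; lia]; auto. Qed.

Lemma settled_parent v : settled (depth1 v) (parent1 v).
Proof.
  destruct (classic (parent1 v = L1)) as [E|E]; [left; auto|right].
  apply parent1_attach; auto.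
Qed.

Lemma lobe_ok_ext Psi G Psi' G' L : lobe_ok Psi G L -> Psi L = Psi' L -> G L = G' L ->
  (L <> L1 -> Psi (parent1 (attach1 L)) = Psi' (parent1 (attach1 L)) /\
              G (parent1 (attach1 L)) = G' (parent1 (attach1 L))) ->
  lobe_ok Psi' G' L.
Proof.
  intros (A & B & C & D) E1 E2 E3. unfold lobe_ok. rewrite <- E1, <- E2.
  split; auto. split; auto. split; auto.
  intros HL. destruct (D HL) as (D1 & D2 & D3). destruct (E3 HL) as [F1 F2].
  rewrite <- (transport_ext Psi G Psi' G' L (attach1 L)) by auto.
  rewrite <- (transport_ext Psi G Psi' G' (parent1 (attach1 L)) (attach1 L)) by auto. auto.
Qed.

Lemma vertex_ok_ext Psi G Psi' G' v : vertex_ok Psi G v ->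
  (forall L, child_of v (parent1 v) L -> Psi L = Psi' L) ->
  Psi (parent1 v) = Psi' (parent1 v) -> G (parent1 v) = G' (parent1 v) -> vertex_ok Psi' G' v.
Proof.
  intros [I1 I2] E E1 E2.
  assert (Ef : vmap Psi G v = vmap Psi' G' v) by (apply transport_ext; auto).
  split.
  - intros La Lb' Ha Hb H. apply I1; auto. rewrite (E La Ha), (E Lb' Hb). auto.
  - intros M HM. rewrite <- Ef in HM. destruct (I2 M HM) as (L & HL & <-).
    exists L. split; auto. symmetry. auto.
Qed.

Lemma lobe_ok_iso Psi G L : lobe L -> lobe_ok Psi G L -> lobe_iso V L (Psi L) (transport Psi G L).
Proof. intros HL (A & B & _). apply transport_iso; auto. Qed.

(* The parent of v is sent to the parent of its image: otherwise [Psi (parent1 v)] would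
   be a child lobe of [vmap v], hence attached at it, while it is attached at the image
   of [attach1 (parent1 v)] <> v. *)
Lemma lobe_ok_parent Psi G v :
  lobe_ok Psi G (parent1 v) -> Psi (parent1 v) = parent2 (vmap Psi G v).
Proof.
  intros HLI. destruct (parent1_spec v) as [HP HPv].
  destruct (lobe_ok_iso Psi G (parent1 v) HP HLI) as (I1 & I2 & _).
  destruct HLI as (A & _ & C & D).
  destruct (classic (parent1 v = L1)) as [E|E].
  - rewrite (C E). symmetry. apply parent_root. rewrite <- (C E). apply I1; auto.
  - destruct (D E) as (_ & D2 & _). destruct (parent1_attach v E) as [Hne _].
    apply NNPP. intros Hn.
    assert (Hch : child_of (vmap Psi G v) (parent2 (vmap Psi G v)) (Psi (parent1 v)))
      by (split; [exact A|split; [apply I1, HPv|exact Hn]]).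
    destruct (child2_attach _ _ Hch) as [_ Hp].
    apply Hne, I2; auto; [apply attach1_spec; auto|]. rewrite <- D2, Hp. reflexivity.
Qed.

Lemma stage_inv_0 : stage_inv 0 (fun _ => L2) (fun _ x => x).
Proof.
  split; [|intros v H; lia].
  intros L HL [->|H]; [|lia]. split; auto.
  split; [split; [apply aut_id|intros x y; tauto]|]. split; auto. intros []; auto.
Qed.

Section Extension.
Variable n : nat.
Variables (Psi : Lb -> Lb) (G : Lb -> V -> V).
Hypothesis Hinv : stage_inv n Psi G.
Variable BB : V -> (Lb -> Lb) * (Lb -> V -> V).
Hypothesis HBB : forall v, depth1 v = n ->
  child_match adj L0 sigma Hsigma v (vmap Psi G v) (parent1 v) (Psi (parent1 v))
    (fst (BB v)) (snd (BB v)).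

Definition fresh (L : Lb) : Prop := lobe L /\ L <> L1 /\ depth1 (attach1 L) = n.

Definition ext_Psi (L : Lb) : Lb :=
  if excluded_middle_informative (fresh L) then fst (BB (attach1 L)) L else Psi L.

Definition ext_G (L : Lb) : V -> V :=
  if excluded_middle_informative (fresh L) then snd (BB (attach1 L)) L else G L.

Lemma ext_old L : settled n L -> ext_Psi L = Psi L /\ ext_G L = G L.
Proof.
  intros HL. unfold ext_Psi, ext_G.
  destruct (excluded_middle_informative (fresh L)) as [(_ & C1 & C2)|C]; auto.
  exfalso. destruct HL as [HL|HL]; [auto|lia].
Qed.

Lemma ext_new L : fresh L -> ext_Psi L = fst (BB (attach1 L)) L /\ ext_G L = snd (BB (attach1 L)) L.
Proof.
  intros HL. unfold ext_Psi, ext_G. destruct (excluded_middle_informative (fresh L)); tauto.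
Qed.

Lemma ext_agree : agree_on n Psi G ext_Psi ext_G.
Proof. intros L HL. destruct (ext_old L HL). auto. Qed.

Lemma ext_lobe_ok_fresh L : fresh L -> lobe_ok ext_Psi ext_G L.
Proof.
  intros Hf. unfold lobe_ok. destruct (ext_new L Hf) as [N1 N2]. destruct Hf as (HL & HnL1 & Hd).
  set (v := attach1 L) in *.
  assert (Hch : child_of v (parent1 v) L) by (apply child1_of_attach; auto).
  destruct (proj1 (HBB v Hd) L Hch) as (B1 & B2 & B3).
  assert (Hcp : settled n (parent1 v)) by (rewrite <- Hd; apply settled_parent).
  destruct (ext_old _ Hcp) as [O1 O2].
  assert (Hpp : Psi (parent1 v) = parent2 (vmap Psi G v))
    by (apply lobe_ok_parent, (proj1 Hinv); [apply parent1_spec|exact Hcp]).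
  rewrite Hpp in B1. destruct (child2_attach _ _ B1) as [T1 T2].
  assert (Hv : transport ext_Psi ext_G L v = vmap Psi G v).
  { change (sigma (ext_Psi L) (ext_G L (sigma_inv L v)) = vmap Psi G v). rewrite N1, N2. exact B3. }
  split; [rewrite N1; apply B1|]. split; [rewrite N2; exact B2|]. split; [intros; contradiction|].
  intros _. rewrite N1, Hv. split; [exact T1|]. split; [exact T2|].
  symmetry. apply transport_ext; auto.
Qed.

Lemma ext_lobe_ok L : lobe L -> settled (S n) L -> lobe_ok ext_Psi ext_G L.
Proof.
  intros HL Hcov. destruct (classic (settled n L)) as [Hc|Hc].
  - destruct (ext_old L Hc) as [O1 O2]. apply (lobe_ok_ext Psi G); auto; [apply Hinv; auto|].
    intros HL1'. assert (Hcp : settled n (parent1 (attach1 L))).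
    { destruct Hc as [Hc|Hc]; [congruence|]. eapply settled_mono; [apply settled_parent|lia]. }
    destruct (ext_old _ Hcp). auto.
  - apply ext_lobe_ok_fresh. split; [exact HL|].
    split; [intros ->; apply Hc; left; auto|].
    destruct Hcov as [Hcov|Hcov]; [exfalso; apply Hc; left; exact Hcov|].
    destruct (Nat.eq_dec (depth1 (attach1 L)) n); auto. exfalso. apply Hc. right. lia.
Qed.

Lemma ext_vertex_ok v : depth1 v < S n -> vertex_ok ext_Psi ext_G v.
Proof.
  intros Hv. destruct (classic (depth1 v < n)) as [Hlt|Hge].
  - assert (Hcp : settled n (parent1 v)) by (eapply settled_mono; [apply settled_parent|lia]).
    destruct (ext_old _ Hcp) as [O1 O2].
    apply (vertex_ok_ext Psi G); [apply Hinv; auto| |auto|auto].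
    intros L HL. destruct (child1_attach v L HL) as [_ Hp].
    symmetry. apply ext_old. right. rewrite Hp. auto.
  - assert (Hd : depth1 v = n) by lia.
    assert (Hcp : settled n (parent1 v)) by (rewrite <- Hd; apply settled_parent).
    destruct (ext_old _ Hcp) as [O1 O2].
    assert (Ef : vmap ext_Psi ext_G v = vmap Psi G v) by (apply transport_ext; auto).
    destruct (HBB v Hd) as (_ & M2 & M3).
    assert (Nv : forall L, child_of v (parent1 v) L -> ext_Psi L = fst (BB v) L).
    { intros L HL. destruct (child1_attach v L HL) as [H1 H2]. rewrite <- H2.
      apply ext_new. split; [apply HL|]. split; auto. rewrite H2. auto. }
    assert (Hpp : Psi (parent1 v) = parent2 (vmap Psi G v))
      by (apply lobe_ok_parent, (proj1 Hinv); [apply parent1_spec|exact Hcp]).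
    split.
    + intros La Lb' Ha Hb E. rewrite (Nv La Ha), (Nv Lb' Hb) in E. exact (M2 La Lb' Ha Hb E).
    + intros M HM. rewrite Ef, <- Hpp in HM. destruct (M3 M HM) as (L & HL & HLM).
      exists L. split; auto. rewrite Nv; auto.
Qed.

End Extension.

Lemma stage_step n Psi G : stage_inv n Psi G ->
  exists Psi' G', agree_on n Psi G Psi' G' /\ stage_inv (S n) Psi' G'.
Proof.
  intros Hinv.
  assert (Hm : forall v, exists bg : (Lb -> Lb) * (Lb -> V -> V), depth1 v = n ->
    child_match adj L0 sigma Hsigma v (vmap Psi G v) (parent1 v) (Psi (parent1 v))
      (fst bg) (snd bg)).
  { intros v. destruct (classic (depth1 v = n)) as [E|E];
      [|exists ((fun L => L), (fun _ x => x)); tauto].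
    destruct (parent1_spec v) as [HP HPv].
    assert (HLIP : lobe_ok Psi G (parent1 v))
      by (apply (proj1 Hinv); auto; rewrite <- E; apply settled_parent).
    destruct HLIP as (A & B & _).
    destruct (children_match adj L0 sigma Hsigma Htau_card v (vmap Psi G v) (parent1 v)
                (Psi (parent1 v))) as (beta & gg & M); auto.
    - apply (transport_iso adj L0 sigma Hsigma Psi G (parent1 v)); auto.
    - apply (transport_aut_orbit adj L0 sigma Hsigma Htau_orbit); auto.
    - apply (transport_stab_orbit adj L0 sigma Hsigma); auto.
    - exists (beta, gg). auto. }
  destruct (choice _ Hm) as (BB & HBB).
  exists (ext_Psi n Psi BB), (ext_G n G BB).
  split; [apply ext_agree|split; [apply ext_lobe_ok|apply ext_vertex_ok]]; auto.
Qed.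

Section Limit.
Variables (Psi : Lb -> Lb) (G : Lb -> V -> V).
Hypothesis Hok : forall L, lobe L -> lobe_ok Psi G L.
Hypothesis Hvok : forall v, vertex_ok Psi G v.

Notation f := (vmap Psi G).

Lemma transport_vmap L v : lobe L -> lv L v -> transport Psi G L v = f v.
Proof.
  intros HL Hv. destruct (classic (L = parent1 v)) as [->|E]; [reflexivity|].
  destruct (child1_attach v L (conj HL (conj Hv E))) as [E1 E2].
  destruct (Hok L HL) as (_ & _ & _ & D). destruct (D E1) as (_ & _ & D3).
  rewrite E2 in D3. exact D3.
Qed.

Lemma attach_Psi L : lobe L -> L <> L1 -> attach2 (Psi L) = f (attach1 L).
Proof.
  intros HL E. destruct (Hok L HL) as (_ & _ & _ & D). destruct (D E) as (_ & D2 & D3).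
  rewrite D2, D3. reflexivity.
Qed.

Lemma parent_vmap v : Psi (parent1 v) = parent2 (f v).
Proof. apply lobe_ok_parent, Hok, parent1_spec. Qed.

Lemma vmap_onto_image L m : lobe L -> lv (Psi L) m -> exists u, lv L u /\ f u = m.
Proof.
  intros HL Hm. destruct (lobe_ok_iso Psi G L HL (Hok L HL)) as (_ & _ & I3 & _).
  destruct (I3 m Hm) as (u & Hu & <-). exists u. split; auto. symmetry. apply transport_vmap; auto.
Qed.

Lemma lobe_at_vmap M v : lobe M -> lv M (f v) -> exists L, lobe L /\ lv L v /\ Psi L = M.
Proof.
  intros HM Hv. destruct (classic (M = parent2 (f v))) as [E|E].
  - exists (parent1 v). destruct (parent1_spec v). split; auto. split; auto.
    rewrite E. apply parent_vmap.
  - destruct (proj2 (Hvok v) M (conj HM (conj Hv E))) as (L & (A & B & _) & C). eauto.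
Qed.

Lemma vmap_inj_same_parent a b : parent1 a = parent1 b -> f a = f b -> a = b.
Proof.
  intros Hp E. destruct (parent1_spec a) as [P1 P2]. destruct (parent1_spec b) as [Q1 Q2].
  destruct (lobe_ok_iso Psi G _ P1 (Hok _ P1)) as (_ & I2 & _). apply I2; auto; [rewrite Hp; auto|].
  unfold vmap in E. rewrite <- Hp in E. exact E.
Qed.

Lemma Psi_inj_settled n La Lb : settled n La -> settled n Lb -> lobe La -> lobe Lb ->
  Psi La = Psi Lb -> La = Lb.
Proof.
  revert La Lb. induction n as [|n IH]; intros La Lb Ca Cb HLa HLb E.
  - destruct Ca as [Ca|Ca]; [|lia]. destruct Cb as [Cb|Cb]; [congruence|lia].
  - destruct (Hok La HLa) as (_ & _ & A3 & A4). destruct (Hok Lb HLb) as (_ & _ & B3 & B4).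
    destruct (classic (La = L1)) as [Ea|Ea]; destruct (classic (Lb = L1)) as [Eb|Eb].
    + congruence.
    + exfalso. apply (proj1 (B4 Eb)). rewrite <- E. auto.
    + exfalso. apply (proj1 (A4 Ea)). rewrite E. auto.
    + assert (Hf : f (attach1 La) = f (attach1 Lb))
        by (rewrite <- !attach_Psi by auto; congruence).
      assert (Hda : depth1 (attach1 La) <= n) by (destruct Ca; [contradiction|lia]).
      assert (Hdb : depth1 (attach1 Lb) <= n) by (destruct Cb; [contradiction|lia]).
      assert (Hv : attach1 La = attach1 Lb).
      { apply vmap_inj_same_parent; auto. apply IH;
          try (eapply settled_mono; [apply settled_parent|lia]); try apply parent1_spec.
        rewrite !parent_vmap. congruence. }
      apply (proj1 (Hvok (attach1 La)) La Lb); auto; [|rewrite Hv];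
        apply child1_of_attach; auto.
Qed.

Lemma Psi_inj La Lb : lobe La -> lobe Lb -> Psi La = Psi Lb -> La = Lb.
Proof.
  intros. apply (Psi_inj_settled (S (Nat.max (depth1 (attach1 La)) (depth1 (attach1 Lb)))));
    auto; right; lia.
Qed.

Lemma vmap_inj a b : f a = f b -> a = b.
Proof.
  intros E. apply vmap_inj_same_parent; auto.
  apply Psi_inj; try apply parent1_spec. rewrite !parent_vmap. congruence.
Qed.

Lemma Psi_surj_depth n M : lobe M -> (M = L2 \/ depth2 (attach2 M) < n) ->
  exists L, lobe L /\ Psi L = M.
Proof.
  assert (H1 : Psi L1 = L2) by (destruct (Hok L1 HL1) as (_ & _ & C & _); auto).
  revert M. induction n as [|n IH]; intros M HM C.
  - destruct C as [->|C]; [exists L1; auto|lia].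
  - destruct (classic (M = L2)) as [->|E]; [exists L1; auto|].
    destruct C as [C|C]; [contradiction|].
    set (m := attach2 M) in *.
    destruct (parent2_spec m) as [Q1 Q2].
    destruct (IH (parent2 m) Q1) as (P & HP & HPsi).
    { destruct (classic (parent2 m = L2)) as [E'|E']; [left; auto|right].
      destruct (parent2_attach m E') as [_ D]. lia. }
    destruct (vmap_onto_image P m HP) as (u & _ & Hfu); [rewrite HPsi; auto|].
    assert (Hch : child_of (f u) (parent2 (f u)) M).
    { rewrite Hfu. split; auto. split; [apply attach2_spec; auto|].
      intros EM. destruct (parent2_attach m) as [Hne _]; [rewrite <- EM; auto|].
      apply Hne. rewrite <- EM. reflexivity. }
    destruct (proj2 (Hvok u) M Hch) as (L & (HL & _) & HLM). exists L. auto.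
Qed.

Lemma vmap_surj y : exists x, f x = y.
Proof.
  destruct (parent2_spec y) as [Q1 Q2].
  destruct (Psi_surj_depth (S (depth2 (attach2 (parent2 y)))) (parent2 y) Q1) as (L & HL & E);
    [right; lia|].
  destruct (vmap_onto_image L y HL) as (x & _ & Hx); [rewrite E; auto|]. eauto.
Qed.

Lemma vmap_edge L a b : lobe L -> L a b -> Psi L (f a) (f b).
Proof.
  intros HL Hab. destruct (lobe_vertex_edge adj Hsym L a b HL Hab) as [Ha Hb].
  destruct (lobe_ok_iso Psi G _ HL (Hok _ HL)) as (_ & _ & _ & I4).
  rewrite <- (transport_vmap L a), <- (transport_vmap L b) by auto. apply I4; auto.
Qed.

Lemma vmap_edge_inv L a b : lobe L -> lv L a -> Psi L (f a) (f b) -> L a b.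
Proof.
  intros HL Ha Hab. destruct (lobe_ok_iso Psi G _ HL (Hok _ HL)) as (_ & _ & I3 & I4).
  destruct (I3 (f b)) as (b' & Hb' & Eb').
  { exists (f a). apply (lobe_sym adj Hsym); [apply Hok; auto|exact Hab]. }
  rewrite (transport_vmap L b' HL Hb') in Eb'. apply vmap_inj in Eb'. subst b'.
  apply (I4 a b Ha Hb'). rewrite !transport_vmap by auto. exact Hab.
Qed.

Lemma vmap_adj a b : adj a b <-> adj (f a) (f b).
Proof.
  split.
  - intros H. destruct (lobe_of_is_lobe adj a b H) as [HL Hab].
    eapply lobe_adj; [apply Hok; exact HL|]. apply vmap_edge; auto.
  - intros H. destruct (lobe_of_is_lobe adj (f a) (f b) H) as [HM Hab].
    destruct (lobe_at_vmap _ a HM) as (L & HL & HLa & E); [exists (f b); auto|].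
    eapply lobe_adj; [exact HL|]. apply vmap_edge_inv; auto. rewrite E. exact Hab.
Qed.

Lemma vmap_aut_maps : is_aut V adj f /\ maps_lobe V f L1 L2.
Proof.
  assert (H1 : Psi L1 = L2) by (destruct (Hok L1 HL1) as (_ & _ & C & _); auto).
  split; [split; [exact vmap_surj|split; [exact vmap_inj|exact vmap_adj]]|].
  intros x y. rewrite <- H1. split; [apply vmap_edge; auto|].
  intros H. destruct (lobe_at_vmap L2 x HL2) as (L & HL & HLx & E);
    [rewrite <- H1; exists (f y); auto|].
  assert (L = L1) by (apply Psi_inj; auto; congruence). subst L.
  apply vmap_edge_inv; auto.
Qed.

End Limit.

Lemma stage_sequence : exists st : nat -> (Lb -> Lb) * (Lb -> V -> V), forall n,
  stage_inv n (fst (st n)) (snd (st n)) /\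
  forall m, n <= m -> agree_on n (fst (st n)) (snd (st n)) (fst (st m)) (snd (st m)).
Proof.
  destruct (choice (fun (p : nat * ((Lb -> Lb) * (Lb -> V -> V))) q =>
     stage_inv (fst p) (fst (snd p)) (snd (snd p)) ->
     agree_on (fst p) (fst (snd p)) (snd (snd p)) (fst q) (snd q) /\
     stage_inv (S (fst p)) (fst q) (snd q))) as (next & Hnext).
  { intros [n [Psi G]]. simpl. destruct (classic (stage_inv n Psi G)) as [H|H].
    - destruct (stage_step n Psi G H) as (Psi' & G' & H1 & H2). exists (Psi', G'). auto.
    - exists (Psi, G). tauto. }
  set (st := fix st n := match n with
                          | 0 => ((fun _ => L2), (fun _ x => x))
                          | S n => next (n, st n)
                          end).
  assert (Hinv : forall n, stage_inv n (fst (st n)) (snd (st n))).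
  { induction n as [|n IH]; [apply stage_inv_0|]. apply (Hnext (n, st n) IH). }
  exists st. intros n. split; [apply Hinv|].
  intros m Hnm. induction Hnm as [|m Hnm IH]; [intros L _; auto|].
  intros L HL. destruct (IH L HL) as [E1 E2].
  destruct (proj1 (Hnext (m, st m) (Hinv m)) L) as [E3 E4];
    [eapply settled_mono; eauto|].
  simpl in *. split; congruence.
Qed.

(* A lobe L is settled, and its image final, from stage [S (depth1 (attach1 L))] on. *)
Lemma aut_mapping_lobe : exists g, is_aut V adj g /\ maps_lobe V g L1 L2.
Proof.
  destruct stage_sequence as (st & Hst).
  set (PsiF := fun L => fst (st (S (depth1 (attach1 L)))) L).
  set (GF := fun L => snd (st (S (depth1 (attach1 L)))) L).
  assert (Eq : forall L n, settled n L -> PsiF L = fst (st n) L /\ GF L = snd (st n) L).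
  { intros L n Hc. unfold PsiF, GF.
    destruct (Nat.le_ge_cases n (S (depth1 (attach1 L)))) as [H|H].
    - destruct (proj2 (Hst n) _ H L Hc). auto.
    - destruct (proj2 (Hst _) n H L) as [E1 E2]; [right; lia|]. auto. }
  exists (vmap PsiF GF). apply vmap_aut_maps.
  - intros L HL. set (n := S (depth1 (attach1 L))).
    assert (Hc : settled n L) by (right; unfold n; lia).
    destruct (Eq L n Hc) as [E1 E2].
    apply (lobe_ok_ext (fst (st n)) (snd (st n))); auto; [apply (proj1 (Hst n)); auto|].
    intros HL1'. destruct (Eq (parent1 (attach1 L)) n); auto.
    eapply settled_mono; [apply settled_parent|unfold n; lia].
  - intros v. set (n := S (depth1 v)).
    assert (Hp : settled n (parent1 v))
      by (eapply settled_mono; [apply settled_parent|unfold n; lia]).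
    apply (vertex_ok_ext (fst (st n)) (snd (st n))); [apply (proj1 (Hst n)); unfold n; lia| | |].
    + intros L HL. destruct (child1_attach v L HL) as [_ Ha].
      symmetry. apply Eq. right. rewrite Ha. unfold n. lia.
    + symmetry. apply Eq, Hp.
    + symmetry. apply Eq, Hp.
Qed.

End Construction.

Theorem theorem3p2 (V : Type) (adj : V -> V -> Prop)
  (Hsimple : simple_graph V adj) (Hconn : connected V adj)
  (Hcount : countable_vertices V) (Hcut : has_cut_vertex V adj)
  (L0 : V -> V -> Prop) (HL0 : is_lobe V adj L0) :
  lobe_transitive V adj <->
  exists sigma : (V -> V -> Prop) -> V -> V,
    (forall L, is_lobe V adj L -> lobe_iso V L0 L (sigma L)) /\
    (forall q, lobe_vertex V L0 q ->
       (forall u w, aut_orbit V adj u w ->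
          equinumerous (tau_set adj L0 sigma q u) (tau_set adj L0 sigma q w)) /\
       (forall v, (exists L, tau_set adj L0 sigma q v L) <->
                  aut_orbit V adj q v)).
Proof.
  destruct Hsimple as [Hsym Hirr]. split.
  - apply lobe_transitive_conditions, HL0.
  - intros (sigma & Hsigma & Htau) L1 L2 HL1 HL2.
    apply (aut_mapping_lobe adj Hsym Hirr Hconn L0 sigma Hsigma); auto;
      intros q Hq; apply (Htau q Hq).
Qed.
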